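(* Let $\Gamma\in(0,1)$, $\lambda>0$, $\alpha,\sigma\ge 0$, and let the thresholds be uniform on $[0,1]$. For each $N$ (large enough that $\lambda\max(\alpha,\sigma)\le N$ and $\Gamma N/(N-1)<1$), let $(B^N(t),D^N(t),X^N(t),Y^N(t))_{t\ge0}$ be the scaled HILT-SI Markov chain described in the context, with $B^N(0)=0$, $X^N(0)\le D^N(0)$, $Y^N(0)\le N-D^N(0)$, and $D^N(0)/N\to d_0$, $X^N(0)/N\to x_0$, $Y^N(0)/N\to y_0$, where $0<d_0\le1$, $0\le x_0\le d_0$, $0\le y_0\le 1-d_0$. Write $\tilde B^N=B^N/N$, $\tilde D^N=D^N/N$, $\tilde X^N=X^N/N$, $\tilde Y^N=Y^N/N$. Then for every $T>0$ and $\epsilon>0$, $$\mathbb{P}\Big(\sup_{0\le u\le T}\big\|(\tilde B^N,\tilde D^N,\tilde X^N,\tilde Y^N)(\lfloor Nu\rfloor)-(b(u),d(u),x(u),y(u))\big\|>\epsilon\Big)\xrightarrow{N\to\infty}0,$$ where, with $a=b+d$, $(b,d,x,y)$ is the unique solution of $$\dot b=d,\quad \dot d=\frac{\Gamma d}{1-\Gamma b}(1-b-d)-d,\quad \dot x=\lambda\alpha(x+y)(a-x)+\frac{\Gamma d}{1-\Gamma b}y,\quad \dot y=\lambda\sigma(x+y)(1-a-y)-\frac{\Gamma d}{1-\Gamma b}y,$$ with $b(0)=0$, $d(0)=d_0$, $x(0)=x_0$, $y(0)=y_0$.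
   Context: Scaled HILT-SI chain with $N$ nodes and $\gamma_N=\Gamma/(N-1)$. Each node is either a destination (interested) or a relay (not interested), and either has or does not have the content; destinations are further either infectious or non-infectious. $B^N(t)$, $D^N(t)$ are the numbers of non-infectious and infectious destinations, $A^N(t)=B^N(t)+D^N(t)$, $X^N(t)$ is the number of destinations having the content, $Y^N(t)$ the number of relays having the content. Transition from minislot $t$ to $t+1$, given $B^N(t)=j$, $D^N(t)=m$, $X^N(t)+Y^N(t)=s$: (i) each infectious destination independently, with probability $1/N$, becomes non-infectious; let $C$ be their number; (ii) given $C=c$, each node that is a relay at time $t$ independently becomes an infectious destination with probability $\gamma_N c/(1-\gamma_N j)$; (iii) independently of (i)–(ii), each node without the content that is a destination at time $t$ obtains the content with probability $\lambda\alpha s/N^2$, and each node without the content that is a relay at time $t$ obtains it with probability $\lambda\sigma s/N^2$; content is never lost. Then $B^N(t+1)=j+c$, $D^N(t+1)=m-c+(\text{number of relays converted in (ii)})$, and $X^N(t+1)$, $Y^N(t+1)$ are the resulting numbers of destinations, respectively relays, having the content. *)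

From Stdlib Require Import Reals Lia ClassicalEpsilon.
Open Scope R_scope.

Definition binom_pmf (n k : nat) (p : R) : R :=
  if (k <=? n)%nat then C n k * p ^ k * (1 - p) ^ (n - k) else 0.

Definition fsum (n : nat) (f : nat -> R) : R := sum_f_R0 f n.

(* State (B, D, X, Y) of the HILT-SI chain. *)
Definition state := (nat * nat * nat * nat)%type.

(* One-step transition operator of the scaled HILT-SI chain with N nodes:
   hilt_step ... N f z = E[ f(Z(t+1)) | Z(t) = z ].
   Decomposition of the transition (i)-(iii):
   c  ~ Bin(m, 1/N)                  infectious -> non-infectious
   q  = gamma_N c / (1 - gamma_N j)  conversion prob. of each relay
   R1 ~ Bin(y, q)                    relays WITH content that convert
   K  ~ Bin(r - y, q)                relays WITHOUT content that convert
   K1 ~ Bin(K, p_r)                  of those, the ones obtaining content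
   L  ~ Bin(r - y - K, p_r)          non-converting relays w/o content obtaining it
   G  ~ Bin(a - x, p_d)              destinations w/o content obtaining it
   (all independent, which is equivalent to the description in the paper). *)
Definition hilt_step (Gam lam alpha sigma : R) (N : nat)
    (f : state -> R) (z : state) : R :=
  let '(j, m, x, y) := z in
  let NR := INR N in
  let gam := Gam / (NR - 1) in
  let a := (j + m)%nat in
  let r := (N - a)%nat in
  let s := INR (x + y) in
  let pd := lam * alpha * s / (NR ^ 2) in
  let pr := lam * sigma * s / (NR ^ 2) in
  fsum m (fun c =>
   binom_pmf m c (/ NR) *
   (let q := gam * INR c / (1 - gam * INR j) in
    fsum y (fun R1 => binom_pmf y R1 q *
    fsum (r - y) (fun K => binom_pmf (r - y) K q *
    fsum K (fun K1 => binom_pmf K K1 pr *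
    fsum (r - y - K) (fun L => binom_pmf (r - y - K) L pr *
    fsum (a - x) (fun G => binom_pmf (a - x) G pd *
      f ((j + c)%nat, (m - c + R1 + K)%nat,
         (x + G + R1 + K1)%nat, (y - R1 + L)%nat)))))))).

(* Probability, starting from state z at time t, that the chain (driven by
   the transition operator step) visits the set bad within the times
   t, t+1, ..., t+n  (bad may depend on time). *)
Fixpoint hit_prob (step : (state -> R) -> state -> R)
    (bad : nat -> state -> Prop) (n t : nat) (z : state) : R :=
  if excluded_middle_informative (bad t z) then 1 else
  match n with
  | O => 0
  | S n' => step (hit_prob step bad n' (S t)) z
  end.

Definition dev (N : nat) (z : state) (b d x y : R -> R) (u : R) : R :=
  let '(B, D, X, Y) := z in
  let NR := INR N in
  Rmax (Rmax (Rabs (INR B / NR - b u)) (Rabs (INR D / NR - d u)))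
       (Rmax (Rabs (INR X / NR - x u)) (Rabs (INR Y / NR - y u))).

Definition bad_at (N : nat) (T eps : R) (b d x y : R -> R) (t : nat) (z : state) : Prop :=
  exists u, 0 <= u <= T /\ Int_part (INR N * u) = Z.of_nat t /\
            dev N z b d x y u > eps.

(* P( sup_{0<=u<=T} || Z~^N(floor(N u)) - (b,d,x,y)(u) || > eps ) for the
   chain started at (0, D0, X0, Y0). *)
Definition dev_prob (Gam lam alpha sigma : R) (N : nat) (D0 X0 Y0 : nat)
    (T eps : R) (b d x y : R -> R) : R :=
  hit_prob (hilt_step Gam lam alpha sigma N) (bad_at N T eps b d x y)
           (Z.to_nat (Int_part (INR N * T))) 0 (0%nat, D0, X0, Y0).

From Stdlib Require Import Reals Lra Lia Psatz ClassicalEpsilon Classical ZArith.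
Open Scope R_scope.

(* Write Z(t) for the chain scaled by 1/N and z(u) = (b, d, x, y)(u) for the ODE
   solution.

   1. [hilt_step] is a nested expectation over six binomial draws ([Ebin],
      [step_exp]); their means are computed exactly and their second moments
      bounded, which gives the drift inequality [sdev_drift]:
        E[|Z(t+1) - w'|^2] <= |Z(t) - w|^2 + 2 <Z(t) - w, F(Z(t), 1/N)/N - (w' - w)>
                              + 2 |w' - w|^2 + O(1/N^2),
      for an explicit scaled vector field F equal to the ODE right-hand side at h = 0.
   2. F is Lipschitz where 1 - h - Gam b is bounded below ([vector_field_lip]).
   3. ODE facts: b <= 1 along the solution ([b_le_1], by a comparison principle for
      linear ODEs and a continuity argument), hence the solution stays in that region.
   4. With w = z(t/N), w' = z((t+1)/N) the drift becomes
      E[S(t+1)] <= S(t) (1 + C/N) + C'/N^2 ([one_step_drift]).  The discounted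
      function W(t) = weight (1 + C/N)^(-t) S(t) exceeds 1 whenever the deviation
      exceeds eps and grows by O(1/N^2) per step, so by a general hitting bound
      ([hit_prob_bound]) an eps-deviation before time N T has probability
      O(S(0) + 1/N) ([hitting_estimate]), which vanishes since Z(0) -> z(0)
      ([dev_prob_vanishes]). *)

Definition Ebin (n : nat) (p : R) (g : nat -> R) : R :=
  fsum n (fun k => binom_pmf n k p * g k).

Lemma Ebin_ext n p g h :
  (forall k, (k <= n)%nat -> g k = h k) -> Ebin n p g = Ebin n p h.
Proof. intros H. unfold Ebin, fsum. apply sum_eq. intros i Hi. rewrite H; auto. Qed.

Lemma binom_pmf_nonneg n k p : 0 <= p <= 1 -> 0 <= binom_pmf n k p.
Proof.
  intros Hp. unfold binom_pmf. destruct (k <=? n)%nat; [|lra].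
  apply Rmult_le_pos; [apply Rmult_le_pos|].
  - unfold C. apply Rmult_le_pos; [apply pos_INR|].
    apply Rlt_le, Rinv_0_lt_compat, Rmult_lt_0_compat; apply lt_0_INR, lt_O_fact.
  - apply pow_le; lra.
  - apply pow_le; lra.
Qed.

Lemma Ebin_le n p g h : 0 <= p <= 1 ->
  (forall k, (k <= n)%nat -> g k <= h k) -> Ebin n p g <= Ebin n p h.
Proof.
  intros Hp H. unfold Ebin, fsum. apply sum_Rle. intros i Hi.
  apply Rmult_le_compat_l; [apply binom_pmf_nonneg; auto | auto].
Qed.

Lemma Ebin_plus n p g h : Ebin n p (fun k => g k + h k) = Ebin n p g + Ebin n p h.
Proof. unfold Ebin, fsum. rewrite <- plus_sum. apply sum_eq. intros; ring. Qed.

Lemma Ebin_scal n p a g : Ebin n p (fun k => a * g k) = a * Ebin n p g.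
Proof. unfold Ebin, fsum. rewrite scal_sum. apply sum_eq. intros; ring. Qed.

Lemma C_diag n : C n n = 1.
Proof.
  unfold C. rewrite Nat.sub_diag. simpl. field. apply not_0_INR, fact_neq_0.
Qed.

Lemma C_zero n : C n 0 = 1.
Proof.
  unfold C. rewrite Nat.sub_0_r. simpl. field. apply not_0_INR, fact_neq_0.
Qed.

Lemma binom_pmf_S0 n p : binom_pmf (S n) 0 p = (1 - p) * binom_pmf n 0 p.
Proof. unfold binom_pmf. simpl. rewrite !C_zero, Nat.sub_0_r. ring. Qed.

Lemma binom_pmf_SS n k p :
  binom_pmf (S n) (S k) p = p * binom_pmf n k p + (1 - p) * binom_pmf n (S k) p.
Proof.
  unfold binom_pmf.
  destruct (Nat.lt_trichotomy k n) as [Hlt|[Heq|Hgt]].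
  - replace (S k <=? S n)%nat with true by (symmetry; apply Nat.leb_le; lia).
    replace (k <=? n)%nat with true by (symmetry; apply Nat.leb_le; lia).
    replace (S k <=? n)%nat with true by (symmetry; apply Nat.leb_le; lia).
    rewrite <- pascal by lia.
    replace (S n - S k)%nat with (S (n - S k)) by lia.
    replace (n - k)%nat with (S (n - S k)) by lia.
    simpl. ring.
  - subst. rewrite Nat.leb_refl.
    replace (S n <=? n)%nat with false by (symmetry; apply Nat.leb_gt; lia).
    rewrite !Nat.sub_diag, !C_diag. rewrite Nat.leb_refl. simpl. ring.
  - replace (S k <=? S n)%nat with false by (symmetry; apply Nat.leb_gt; lia).
    replace (k <=? n)%nat with false by (symmetry; apply Nat.leb_gt; lia).
    replace (S k <=? n)%nat with false by (symmetry; apply Nat.leb_gt; lia).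
    ring.
Qed.

Lemma binom_pmf_out n p : binom_pmf n (S n) p = 0.
Proof.
  unfold binom_pmf. replace (S n <=? n)%nat with false by (symmetry; apply Nat.leb_gt; lia).
  reflexivity.
Qed.

Lemma Ebin_0 p g : Ebin 0 p g = g 0%nat.
Proof. unfold Ebin, fsum, binom_pmf. simpl. unfold C. simpl. field. Qed.

Lemma Ebin_S n p g :
  Ebin (S n) p g = (1 - p) * Ebin n p g + p * Ebin n p (fun k => g (S k)).
Proof.
  unfold Ebin, fsum.
  rewrite decomp_sum by lia. simpl pred. rewrite binom_pmf_S0.
  transitivity ((1 - p) * binom_pmf n 0 p * g 0%nat +
     sum_f_R0 (fun i => p * (binom_pmf n i p * g (S i))
                        + (1 - p) * (binom_pmf n (S i) p * g (S i))) n).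
  { f_equal. apply sum_eq. intros i Hi. rewrite binom_pmf_SS. ring. }
  rewrite plus_sum.
  rewrite (sum_eq (fun i => p * _) (fun i => (binom_pmf n i p * g (S i)) * p))
    by (intros; ring).
  rewrite (sum_eq (fun i => (1 - p) * _) (fun i => (binom_pmf n (S i) p * g (S i)) * (1 - p)))
    by (intros; ring).
  rewrite <- !scal_sum.
  destruct n as [|n].
  - simpl. rewrite binom_pmf_out. ring.
  - rewrite (decomp_sum (fun k => binom_pmf (S n) k p * g k)) by lia. simpl pred.
    rewrite (tech5 (fun i => binom_pmf (S n) (S i) p * g (S i))), binom_pmf_out. ring.
Qed.

Lemma Ebin_const n p c : Ebin n p (fun _ => c) = c.
Proof. induction n; [apply Ebin_0 | rewrite Ebin_S, IHn; ring]. Qed.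

Lemma Ebin_mean n p : Ebin n p INR = INR n * p.
Proof.
  induction n; [rewrite Ebin_0; simpl; ring|].
  rewrite Ebin_S, IHn, (Ebin_ext _ _ _ (fun k => INR k + 1))
    by (intros; rewrite S_INR; ring).
  rewrite Ebin_plus, IHn, Ebin_const, S_INR. ring.
Qed.

Lemma Ebin_second_moment n p :
  Ebin n p (fun k => INR k ^ 2) = INR n * p * (1 - p) + (INR n * p) ^ 2.
Proof.
  induction n; [rewrite Ebin_0; simpl; ring|].
  rewrite Ebin_S, IHn,
    (Ebin_ext _ _ (fun k => INR (S k) ^ 2) (fun k => INR k ^ 2 + (2 * INR k + 1)))
    by (intros; rewrite S_INR; ring).
  rewrite Ebin_plus, IHn, Ebin_plus, Ebin_scal, Ebin_const, Ebin_mean, S_INR. ring.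
Qed.

Lemma Ebin_affine n p a b : Ebin n p (fun k => a + b * INR k) = a + b * (INR n * p).
Proof. rewrite Ebin_plus, Ebin_scal, Ebin_const, Ebin_mean. ring. Qed.

Lemma Ebin_second_moment_le n p B : 0 <= p <= 1 -> INR n * p <= B ->
  Ebin n p (fun k => INR k ^ 2) <= B + B ^ 2.
Proof.
  intros Hp HB. rewrite Ebin_second_moment.
  assert (0 <= INR n * p) by (apply Rmult_le_pos; [apply pos_INR | lra]).
  nra.
Qed.

Lemma Rdiv_nonneg a b : 0 <= a -> 0 < b -> 0 <= a / b.
Proof. intros Ha Hb. apply Rmult_le_pos; [exact Ha | apply Rlt_le, Rinv_0_lt_compat, Hb]. Qed.

Lemma invN_range N : (1 <= N)%nat -> 0 <= / INR N <= 1.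
Proof.
  intros H. apply le_INR in H. simpl in H. split.
  - apply Rlt_le, Rinv_0_lt_compat; lra.
  - rewrite <- Rinv_1. apply Rinv_le_contravar; lra.
Qed.

Definition gamN (Gam : R) (N : nat) : R := Gam / (INR N - 1).
Definition conv_prob (Gam : R) (N j c : nat) : R :=
  gamN Gam N * INR c / (1 - gamN Gam N * INR j).
Definition gain_prob (l : R) (N x y : nat) : R := l * INR (x + y) / INR N ^ 2.

(* Scaled mean vector field, with h standing for 1/N; at h = 0 these are the
   right-hand sides of the ODE (the conversion intensity becomes
   Gam d / (1 - Gam b)). *)
Definition conv_intensity (Gam b d h : R) : R := Gam * d / (1 - h - Gam * b).
Definition Fb (b d x y h : R) : R := d.
Definition Fd (Gam b d x y h : R) : R := - d + (1 - b - d) * conv_intensity Gam b d h.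
Definition Fx (Gam la ls b d x y h : R) : R :=
  la * (b + d - x) * (x + y) + y * conv_intensity Gam b d h
  + (1 - b - d - y) * conv_intensity Gam b d h * ls * (x + y) * h.
Definition Fy (Gam la ls b d x y h : R) : R :=
  (1 - b - d - y) * (1 - conv_intensity Gam b d h * h) * ls * (x + y)
  - y * conv_intensity Gam b d h.

Definition Sdev (N : nat) (z : state) (wb wd wx wy : R) : R :=
  let '(B, D, X, Y) := z in
  (INR B / INR N - wb) ^ 2 + (INR D / INR N - wd) ^ 2
  + (INR X / INR N - wx) ^ 2 + (INR Y / INR N - wy) ^ 2.

(* kp bounds the mean number of relay conversions per destination that stops being
   infectious; Cq sums the bounds on the second moments of the draws c, R1, K, L, G. *)
Definition kp (Gam : R) : R := 2 / (1 - Gam).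
Definition Cq (Gam lam alpha sigma : R) : R :=
  2 + 2 * (kp Gam + 2 * kp Gam ^ 2) + (lam * sigma + (lam * sigma) ^ 2)
  + (lam * alpha + (lam * alpha) ^ 2).

Section Transition.

Variables (Gam lam alpha sigma : R) (N : nat).
Hypothesis hGam : 0 < Gam < 1.
Hypothesis hla : 0 <= lam * alpha.
Hypothesis hls : 0 <= lam * sigma.
Hypothesis hN : (2 <= N)%nat.
Hypothesis hgam : Gam * INR N / (INR N - 1) <= (1 + Gam) / 2.
Hypothesis hlaN : lam * alpha <= INR N.
Hypothesis hlsN : lam * sigma <= INR N.

Definition step_exp (j m x y : nat) (P : nat -> nat -> nat -> nat -> nat -> nat -> R) : R :=
  Ebin m (/ INR N) (fun c =>
  Ebin y (conv_prob Gam N j c) (fun R1 =>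
  Ebin (N - (j + m) - y) (conv_prob Gam N j c) (fun K =>
  Ebin K (gain_prob (lam * sigma) N x y) (fun K1 =>
  Ebin (N - (j + m) - y - K) (gain_prob (lam * sigma) N x y) (fun L =>
  Ebin ((j + m) - x) (gain_prob (lam * alpha) N x y) (fun G => P c R1 K K1 L G)))))).

Definition next_state (j m x y c R1 K K1 L G : nat) : state :=
  ((j + c)%nat, (m - c + R1 + K)%nat, (x + G + R1 + K1)%nat, (y - R1 + L)%nat).

Lemma hilt_step_nested f j m x y :
  hilt_step Gam lam alpha sigma N f (j, m, x, y) =
  step_exp j m x y (fun c R1 K K1 L G => f (next_state j m x y c R1 K K1 L G)).
Proof. reflexivity. Qed.

Definition admissible (z : state) : Prop :=
  let '(j, m, x, y) := z in (j + m <= N /\ x <= j + m /\ y <= N - (j + m))%nat.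

Definition draw_in_range (j m x y c R1 K K1 L G : nat) : Prop :=
  (c <= m /\ R1 <= y /\ K <= N - (j + m) - y /\ K1 <= K
   /\ L <= N - (j + m) - y - K /\ G <= (j + m) - x)%nat.

Lemma INR_N_ge2 : 2 <= INR N.
Proof. apply le_INR in hN. simpl in hN. lra. Qed.

Lemma gamN_facts : 0 < gamN Gam N /\ gamN Gam N * INR N <= (1 + Gam) / 2.
Proof.
  pose proof INR_N_ge2. unfold gamN. split.
  - apply Rdiv_lt_0_compat; lra.
  - unfold Rdiv in *. rewrite Rmult_assoc, (Rmult_comm _ (INR N)), <- Rmult_assoc. lra.
Qed.

Lemma conv_den_lower j : (j <= N)%nat -> (1 - Gam) / 2 <= 1 - gamN Gam N * INR j.
Proof.
  intros Hj. destruct gamN_facts as [H1 H2]. apply le_INR in Hj.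
  assert (gamN Gam N * INR j <= gamN Gam N * INR N) by (apply Rmult_le_compat_l; lra).
  lra.
Qed.

Lemma conv_prob_range j c : (j + c <= N)%nat -> 0 <= conv_prob Gam N j c <= 1.
Proof.
  intros Hjc. pose proof (conv_den_lower j ltac:(lia)) as Hd.
  destruct gamN_facts as [H1 H2].
  apply le_INR in Hjc. rewrite plus_INR in Hjc.
  pose proof (pos_INR c). pose proof (pos_INR j).
  unfold conv_prob. split.
  - apply Rmult_le_pos; [apply Rmult_le_pos; lra|]. apply Rlt_le, Rinv_0_lt_compat; lra.
  - apply Rmult_le_reg_r with (1 - gamN Gam N * INR j); [lra|].
    unfold Rdiv. rewrite Rmult_assoc, Rinv_l by lra.
    assert (gamN Gam N * (INR j + INR c) <= gamN Gam N * INR N)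
      by (apply Rmult_le_compat_l; lra).
    nra.
Qed.

Lemma gain_prob_range l x y : 0 <= l -> l <= INR N -> (x + y <= N)%nat ->
  0 <= gain_prob l N x y <= 1 /\ INR N * gain_prob l N x y <= l.
Proof.
  intros Hl HlN Hxy. pose proof INR_N_ge2.
  apply le_INR in Hxy. pose proof (pos_INR (x + y)).
  assert (E : INR N * gain_prob l N x y = l * (INR (x + y) / INR N))
    by (unfold gain_prob; field; lra).
  assert (H01 : 0 <= INR (x + y) / INR N <= 1).
  { split; [apply Rdiv_nonneg; lra|].
    apply Rmult_le_reg_r with (INR N); [lra|]. unfold Rdiv.
    rewrite Rmult_assoc, Rinv_l by lra. lra. }
  assert (Hp : 0 <= gain_prob l N x y).
  { unfold gain_prob. apply Rdiv_nonneg; nra. }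
  assert (HNp : INR N * gain_prob l N x y <= l) by (rewrite E; nra).
  repeat split; auto. nra.
Qed.

Lemma step_exp_le j m x y P Q : admissible (j, m, x, y) ->
  (forall c R1 K K1 L G, draw_in_range j m x y c R1 K K1 L G ->
     P c R1 K K1 L G <= Q c R1 K K1 L G) ->
  step_exp j m x y P <= step_exp j m x y Q.
Proof.
  intros HI H. simpl in HI.
  assert (Hxy : (x + y <= N)%nat) by lia.
  destruct (gain_prob_range _ x y hls hlsN Hxy) as [Hs _].
  destruct (gain_prob_range _ x y hla hlaN Hxy) as [Ha _].
  unfold step_exp. apply Ebin_le; [apply invN_range; lia|]. intros c Hc.
  pose proof (conv_prob_range j c ltac:(lia)) as Hq.
  apply Ebin_le; auto. intros R1 HR1.
  apply Ebin_le; auto. intros K HK.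
  apply Ebin_le; auto. intros K1 HK1.
  apply Ebin_le; auto. intros L HL.
  apply Ebin_le; auto. intros G HG.
  apply H. unfold draw_in_range. tauto.
Qed.

Lemma next_state_admissible j m x y c R1 K K1 L G : admissible (j, m, x, y) ->
  draw_in_range j m x y c R1 K K1 L G -> admissible (next_state j m x y c R1 K K1 L G).
Proof. unfold admissible, draw_in_range, next_state. intros. lia. Qed.

Lemma step_le z f g : admissible z -> (forall s, admissible s -> f s <= g s) ->
  hilt_step Gam lam alpha sigma N f z <= hilt_step Gam lam alpha sigma N g z.
Proof.
  intros HI H. destruct z as [[[j m] x] y].
  rewrite !hilt_step_nested. apply step_exp_le; auto.
  intros. apply H, next_state_admissible; auto.
Qed.

Lemma step_exp_const j m x y a : step_exp j m x y (fun _ _ _ _ _ _ => a) = a.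
Proof.
  unfold step_exp.
  erewrite Ebin_ext; [apply Ebin_const|]. intros c _. simpl.
  erewrite Ebin_ext; [apply Ebin_const|]. intros R1 _. simpl.
  erewrite Ebin_ext; [apply Ebin_const|]. intros K _. simpl.
  erewrite Ebin_ext; [apply Ebin_const|]. intros K1 _. simpl.
  erewrite Ebin_ext; [apply Ebin_const|]. intros L _. simpl.
  apply Ebin_const.
Qed.

Lemma step_exp_plus j m x y P Q :
  step_exp j m x y (fun c R1 K K1 L G => P c R1 K K1 L G + Q c R1 K K1 L G) =
  step_exp j m x y P + step_exp j m x y Q.
Proof.
  unfold step_exp. rewrite <- Ebin_plus. apply Ebin_ext; intros c _.
  rewrite <- Ebin_plus. apply Ebin_ext; intros R1 _.
  rewrite <- Ebin_plus. apply Ebin_ext; intros K _.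
  rewrite <- Ebin_plus. apply Ebin_ext; intros K1 _.
  rewrite <- Ebin_plus. apply Ebin_ext; intros L _.
  rewrite <- Ebin_plus. reflexivity.
Qed.

Lemma step_exp_scal j m x y a P :
  step_exp j m x y (fun c R1 K K1 L G => a * P c R1 K K1 L G) = a * step_exp j m x y P.
Proof.
  unfold step_exp. rewrite <- Ebin_scal. apply Ebin_ext; intros c _.
  rewrite <- Ebin_scal. apply Ebin_ext; intros R1 _.
  rewrite <- Ebin_scal. apply Ebin_ext; intros K _.
  rewrite <- Ebin_scal. apply Ebin_ext; intros K1 _.
  rewrite <- Ebin_scal. apply Ebin_ext; intros L _.
  rewrite <- Ebin_scal. reflexivity.
Qed.

Lemma step_const z a : hilt_step Gam lam alpha sigma N (fun _ => a) z = a.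
Proof. destruct z as [[[j m] x] y]. rewrite hilt_step_nested. apply step_exp_const. Qed.

Lemma step_plus_const z f a :
  hilt_step Gam lam alpha sigma N (fun s => f s + a) z =
  hilt_step Gam lam alpha sigma N f z + a.
Proof.
  destruct z as [[[j m] x] y]. rewrite !hilt_step_nested.
  rewrite (step_exp_plus _ _ _ _ (fun c R1 K K1 L G => f (next_state j m x y c R1 K K1 L G))
             (fun _ _ _ _ _ _ => a)).
  rewrite step_exp_const. reflexivity.
Qed.

Lemma step_scal z f a :
  hilt_step Gam lam alpha sigma N (fun s => a * f s) z =
  a * hilt_step Gam lam alpha sigma N f z.
Proof.
  destruct z as [[[j m] x] y]. rewrite !hilt_step_nested.
  apply (step_exp_scal _ _ _ _ a (fun c R1 K K1 L G => f (next_state j m x y c R1 K K1 L G))).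
Qed.


Ltac integrate_out :=
  first [ apply Ebin_const
        | erewrite Ebin_ext; [apply Ebin_const|]; intros ? _; cbv beta; integrate_out ].
Ltac skip_draw := erewrite Ebin_ext; [apply Ebin_const|]; intros ? _; cbv beta.

Lemma marginal_c j m x y f :
  step_exp j m x y (fun c _ _ _ _ _ => f c) = Ebin m (/ INR N) f.
Proof. unfold step_exp. apply Ebin_ext; intros c _. integrate_out. Qed.

Lemma marginal_R1 j m x y f :
  step_exp j m x y (fun c R1 _ _ _ _ => f c R1) =
  Ebin m (/ INR N) (fun c => Ebin y (conv_prob Gam N j c) (f c)).
Proof. unfold step_exp. apply Ebin_ext; intros c _. apply Ebin_ext; intros R1 _. integrate_out. Qed.

Lemma marginal_K j m x y f :
  step_exp j m x y (fun c _ K _ _ _ => f c K) =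
  Ebin m (/ INR N) (fun c => Ebin (N - (j + m) - y) (conv_prob Gam N j c) (f c)).
Proof.
  unfold step_exp. apply Ebin_ext; intros c _. skip_draw.
  apply Ebin_ext; intros K _. integrate_out.
Qed.

Lemma marginal_K1 j m x y f :
  step_exp j m x y (fun c _ K K1 _ _ => f c K K1) =
  Ebin m (/ INR N) (fun c => Ebin (N - (j + m) - y) (conv_prob Gam N j c) (fun K =>
     Ebin K (gain_prob (lam * sigma) N x y) (f c K))).
Proof.
  unfold step_exp. apply Ebin_ext; intros c _. skip_draw.
  apply Ebin_ext; intros K _. apply Ebin_ext; intros K1 _. integrate_out.
Qed.

Lemma marginal_L j m x y f :
  step_exp j m x y (fun c _ K _ L _ => f c K L) =
  Ebin m (/ INR N) (fun c => Ebin (N - (j + m) - y) (conv_prob Gam N j c) (fun K =>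
     Ebin (N - (j + m) - y - K) (gain_prob (lam * sigma) N x y) (f c K))).
Proof.
  unfold step_exp. apply Ebin_ext; intros c _. skip_draw.
  apply Ebin_ext; intros K _. skip_draw. apply Ebin_ext; intros L _. integrate_out.
Qed.

Lemma marginal_G j m x y f :
  step_exp j m x y (fun _ _ _ _ _ G => f G) = Ebin ((j + m) - x) (gain_prob (lam * alpha) N x y) f.
Proof. unfold step_exp. do 5 skip_draw. reflexivity. Qed.

Definition conv_coef (j : nat) : R := gamN Gam N / (1 - gamN Gam N * INR j).

Lemma conv_prob_linear j c : conv_prob Gam N j c = conv_coef j * INR c.
Proof. unfold conv_prob, conv_coef, Rdiv. ring. Qed.

Lemma mean_c j m x y :
  step_exp j m x y (fun c _ _ _ _ _ => INR c) = INR m * / INR N.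
Proof. rewrite marginal_c. apply Ebin_mean. Qed.

Lemma mean_R1 j m x y :
  step_exp j m x y (fun _ R1 _ _ _ _ => INR R1) = INR y * conv_coef j * (INR m * / INR N).
Proof.
  rewrite (marginal_R1 _ _ _ _ (fun _ R1 => INR R1)).
  rewrite (Ebin_ext _ _ _ (fun c => INR y * conv_coef j * INR c)).
  - rewrite Ebin_scal, Ebin_mean. ring.
  - intros c _. rewrite Ebin_mean, conv_prob_linear. ring.
Qed.

Lemma mean_K j m x y :
  step_exp j m x y (fun _ _ K _ _ _ => INR K) =
  INR (N - (j + m) - y) * conv_coef j * (INR m * / INR N).
Proof.
  rewrite (marginal_K _ _ _ _ (fun _ K => INR K)).
  rewrite (Ebin_ext _ _ _ (fun c => INR (N - (j + m) - y) * conv_coef j * INR c)).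
  - rewrite Ebin_scal, Ebin_mean. ring.
  - intros c _. rewrite Ebin_mean, conv_prob_linear. ring.
Qed.

Lemma mean_K1 j m x y :
  step_exp j m x y (fun _ _ _ K1 _ _ => INR K1) =
  INR (N - (j + m) - y) * conv_coef j * (INR m * / INR N) * gain_prob (lam * sigma) N x y.
Proof.
  rewrite (marginal_K1 _ _ _ _ (fun _ _ K1 => INR K1)).
  rewrite (Ebin_ext _ _ _ (fun c => INR (N - (j + m) - y) * conv_coef j
                                     * gain_prob (lam * sigma) N x y * INR c)).
  - rewrite Ebin_scal, Ebin_mean. ring.
  - intros c _.
    rewrite (Ebin_ext _ _ _ (fun K => gain_prob (lam * sigma) N x y * INR K)).
    + rewrite Ebin_scal, Ebin_mean, conv_prob_linear. ring.
    + intros K _. rewrite Ebin_mean. ring.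
Qed.

Lemma mean_L j m x y :
  step_exp j m x y (fun _ _ _ _ L _ => INR L) =
  INR (N - (j + m) - y) * gain_prob (lam * sigma) N x y * (1 - conv_coef j * (INR m * / INR N)).
Proof.
  rewrite (marginal_L _ _ _ _ (fun _ _ L => INR L)).
  set (n := (N - (j + m) - y)%nat). set (p := gain_prob (lam * sigma) N x y).
  rewrite (Ebin_ext _ _ _ (fun c => INR n * p + (- INR n * p * conv_coef j) * INR c)).
  - rewrite Ebin_affine. ring.
  - intros c _.
    rewrite (Ebin_ext _ _ _ (fun K => INR n * p + (- p) * INR K)).
    + rewrite Ebin_affine, conv_prob_linear. ring.
    + intros K HK. rewrite Ebin_mean, minus_INR by exact HK. ring.
Qed.

Lemma mean_G j m x y :
  step_exp j m x y (fun _ _ _ _ _ G => INR G) = INR ((j + m) - x) * gain_prob (lam * alpha) N x y.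
Proof. rewrite (marginal_G _ _ _ _ INR). apply Ebin_mean. Qed.

Lemma kp_pos : 0 < kp Gam.
Proof. unfold kp. apply Rdiv_lt_0_compat; lra. Qed.

Lemma conv_mean_le j c n : (j <= N)%nat -> (n <= N)%nat ->
  INR n * conv_prob Gam N j c <= kp Gam * INR c.
Proof.
  intros Hj Hn. pose proof (conv_den_lower j Hj) as Hd.
  destruct gamN_facts as [H1 H2].
  apply le_INR in Hn. pose proof (pos_INR c). pose proof (pos_INR n).
  assert (Hng : INR n * gamN Gam N <= 1) by nra.
  rewrite conv_prob_linear. unfold conv_coef, kp.
  replace (INR n * (gamN Gam N / (1 - gamN Gam N * INR j) * INR c))
    with (INR n * gamN Gam N * INR c / (1 - gamN Gam N * INR j)) by (field; lra).
  replace (2 / (1 - Gam) * INR c) with (INR c / ((1 - Gam) / 2)) by (field; lra).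
  unfold Rdiv. apply Rmult_le_compat.
  - apply Rmult_le_pos; nra.
  - apply Rlt_le, Rinv_0_lt_compat; lra.
  - nra.
  - apply Rinv_le_contravar; lra.
Qed.

Lemma mixed_second_moment_le m (f : nat -> R) B : (m <= N)%nat -> 0 <= B ->
  (forall c, (c <= m)%nat -> f c <= B * INR c + B ^ 2 * INR c ^ 2) ->
  Ebin m (/ INR N) f <= B + 2 * B ^ 2.
Proof.
  intros Hm HB H. pose proof INR_N_ge2.
  assert (HNr : 0 <= / INR N <= 1) by (apply invN_range; lia).
  eapply Rle_trans; [apply Ebin_le; [exact HNr | exact H]|].
  rewrite Ebin_plus, !Ebin_scal, Ebin_mean.
  assert (H1 : INR m * / INR N <= 1).
  { apply le_INR in Hm. apply Rmult_le_reg_r with (INR N); [lra|].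
    rewrite Rmult_assoc, Rinv_l by lra. lra. }
  pose proof (Ebin_second_moment_le m (/ INR N) 1 HNr H1).
  assert (0 <= INR m * / INR N) by (apply Rmult_le_pos; [apply pos_INR | lra]).
  assert (B ^ 2 * Ebin m (/ INR N) (fun k => INR k ^ 2) <= B ^ 2 * 2)
    by (apply Rmult_le_compat_l; nra).
  nra.
Qed.

Lemma second_moment_c j m x y : admissible (j, m, x, y) ->
  step_exp j m x y (fun c _ _ _ _ _ => INR c ^ 2) <= 2.
Proof.
  intros HI. simpl in HI. rewrite (marginal_c _ _ _ _ (fun c => INR c ^ 2)).
  pose proof INR_N_ge2.
  replace 2 with (1 + 1 ^ 2) by ring.
  apply Ebin_second_moment_le; [apply invN_range; lia|].
  assert (Hm : INR m <= INR N) by (apply le_INR; lia).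
  apply Rmult_le_reg_r with (INR N); [lra|].
  rewrite Rmult_assoc, Rinv_l by lra. lra.
Qed.

Lemma second_moment_R1 j m x y : admissible (j, m, x, y) ->
  step_exp j m x y (fun _ R1 _ _ _ _ => INR R1 ^ 2) <= kp Gam + 2 * kp Gam ^ 2.
Proof.
  intros HI. simpl in HI. rewrite (marginal_R1 _ _ _ _ (fun _ R1 => INR R1 ^ 2)).
  pose proof kp_pos.
  apply mixed_second_moment_le; [lia | lra|]. intros c Hc.
  pose proof (conv_prob_range j c ltac:(lia)) as Hq.
  pose proof (conv_mean_le j c y ltac:(lia) ltac:(lia)) as Hb.
  eapply Rle_trans; [apply Ebin_second_moment_le; eauto|].
  pose proof (pos_INR c). nra.
Qed.

Lemma second_moment_K j m x y : admissible (j, m, x, y) ->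
  step_exp j m x y (fun _ _ K _ _ _ => INR K ^ 2) <= kp Gam + 2 * kp Gam ^ 2.
Proof.
  intros HI. simpl in HI. rewrite (marginal_K _ _ _ _ (fun _ K => INR K ^ 2)).
  pose proof kp_pos.
  apply mixed_second_moment_le; [lia | lra|]. intros c Hc.
  pose proof (conv_prob_range j c ltac:(lia)) as Hq.
  pose proof (conv_mean_le j c (N - (j + m) - y) ltac:(lia) ltac:(lia)) as Hb.
  eapply Rle_trans; [apply Ebin_second_moment_le; eauto|].
  pose proof (pos_INR c). nra.
Qed.

Lemma second_moment_L j m x y : admissible (j, m, x, y) ->
  step_exp j m x y (fun _ _ _ _ L _ => INR L ^ 2) <= lam * sigma + (lam * sigma) ^ 2.
Proof.
  intros HI. simpl in HI. rewrite (marginal_L _ _ _ _ (fun _ _ L => INR L ^ 2)).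
  destruct (gain_prob_range _ x y hls hlsN ltac:(lia)) as [Hp HNp].
  rewrite <- (Ebin_const m (/ INR N) (lam * sigma + (lam * sigma) ^ 2)).
  apply Ebin_le; [apply invN_range; lia|]. intros c Hc.
  rewrite <- (Ebin_const (N - (j + m) - y) (conv_prob Gam N j c) (lam * sigma + (lam * sigma) ^ 2)).
  apply Ebin_le; [apply conv_prob_range; lia|]. intros K HK.
  apply Ebin_second_moment_le; [lra|].
  eapply Rle_trans; [|exact HNp]. apply Rmult_le_compat_r; [lra|]. apply le_INR; lia.
Qed.

Lemma second_moment_G j m x y : admissible (j, m, x, y) ->
  step_exp j m x y (fun _ _ _ _ _ G => INR G ^ 2) <= lam * alpha + (lam * alpha) ^ 2.
Proof.
  intros HI. simpl in HI. rewrite (marginal_G _ _ _ _ (fun G => INR G ^ 2)).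
  destruct (gain_prob_range _ x y hla hlaN ltac:(lia)) as [Hp HNp].
  apply Ebin_second_moment_le; [lra|].
  eapply Rle_trans; [|exact HNp]. apply Rmult_le_compat_r; [lra|]. apply le_INR; lia.
Qed.


(* The expected increments, times N, are the scaled vector field at h = 1/N. *)
Lemma conv_den_scaled_pos j : (j <= N)%nat -> 0 < INR N - 1 - Gam * INR j.
Proof.
  intros Hj. pose proof (conv_den_lower j Hj) as Hd. pose proof INR_N_ge2. unfold gamN in Hd.
  replace (INR N - 1 - Gam * INR j) with ((INR N - 1) * (1 - Gam / (INR N - 1) * INR j))
    by (field; lra).
  apply Rmult_lt_0_compat; lra.
Qed.

Ltac mean_field_solve Hj :=
  pose proof INR_N_ge2; pose proof (conv_den_scaled_pos _ Hj);
  rewrite !minus_INR by lia; rewrite !plus_INR;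
  unfold Fd, Fx, Fy, conv_intensity, conv_coef, gamN, gain_prob; rewrite ?plus_INR;
  field; repeat split; lra.

Lemma mean_increment_d j m x y : admissible (j, m, x, y) ->
  - (INR m * / INR N) + INR y * conv_coef j * (INR m * / INR N)
  + INR (N - (j + m) - y) * conv_coef j * (INR m * / INR N) =
  Fd Gam (INR j / INR N) (INR m / INR N) (INR x / INR N) (INR y / INR N) (/ INR N).
Proof. intros HI. simpl in HI. assert (Hj : (j <= N)%nat) by lia. mean_field_solve Hj. Qed.

Lemma mean_increment_x j m x y : admissible (j, m, x, y) ->
  INR ((j + m) - x) * gain_prob (lam * alpha) N x y + INR y * conv_coef j * (INR m * / INR N)
  + INR (N - (j + m) - y) * conv_coef j * (INR m * / INR N) * gain_prob (lam * sigma) N x y =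
  Fx Gam (lam * alpha) (lam * sigma)
     (INR j / INR N) (INR m / INR N) (INR x / INR N) (INR y / INR N) (/ INR N).
Proof. intros HI. simpl in HI. assert (Hj : (j <= N)%nat) by lia. mean_field_solve Hj. Qed.

Lemma mean_increment_y j m x y : admissible (j, m, x, y) ->
  INR (N - (j + m) - y) * gain_prob (lam * sigma) N x y * (1 - conv_coef j * (INR m * / INR N))
  - INR y * conv_coef j * (INR m * / INR N) =
  Fy Gam (lam * alpha) (lam * sigma)
     (INR j / INR N) (INR m / INR N) (INR x / INR N) (INR y / INR N) (/ INR N).
Proof. intros HI. simpl in HI. assert (Hj : (j <= N)%nat) by lia. mean_field_solve Hj. Qed.

Lemma square_expand_le e v d :
  (e + v - d) ^ 2 <= e ^ 2 + 2 * e * v - 2 * e * d + 2 * v ^ 2 + 2 * d ^ 2.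
Proof. pose proof (pow2_ge_0 (v + d)). nra. Qed.

Lemma jump_square_le c R1 K K1 L G : 0 <= K1 <= K ->
  c ^ 2 + (- c + R1 + K) ^ 2 + (G + R1 + K1) ^ 2 + (L - R1) ^ 2 <=
  8 * (c ^ 2 + R1 ^ 2 + K ^ 2 + L ^ 2 + G ^ 2).
Proof.
  intros H.
  assert ((- c + R1 + K) ^ 2 <= 3 * (c ^ 2 + R1 ^ 2 + K ^ 2))
    by (pose proof (pow2_ge_0 (c + R1)); pose proof (pow2_ge_0 (c + K));
        pose proof (pow2_ge_0 (R1 - K)); nra).
  assert ((G + R1 + K1) ^ 2 <= 3 * (G ^ 2 + R1 ^ 2 + K1 ^ 2))
    by (pose proof (pow2_ge_0 (G - R1)); pose proof (pow2_ge_0 (G - K1));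
        pose proof (pow2_ge_0 (R1 - K1)); nra).
  assert ((L - R1) ^ 2 <= 2 * (L ^ 2 + R1 ^ 2)) by (pose proof (pow2_ge_0 (L + R1)); nra).
  assert (K1 ^ 2 <= K ^ 2) by nra.
  nra.
Qed.

(* Pathwise expansion of the new squared deviation from target w', in terms of
   the old deviation e from target w: a quadratic form that is affine in the draws
   plus their squares. *)
Lemma sdev_next_le j m x y c R1 K K1 L G wb wd wx wy wb' wd' wx' wy' :
  (c <= m)%nat -> (R1 <= y)%nat -> (K1 <= K)%nat ->
  let eb := INR j / INR N - wb in let ed := INR m / INR N - wd in
  let ex := INR x / INR N - wx in let ey := INR y / INR N - wy in
  Sdev N (next_state j m x y c R1 K K1 L G) wb' wd' wx' wy' <=
  (eb ^ 2 + ed ^ 2 + ex ^ 2 + ey ^ 2)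
  - 2 * (eb * (wb' - wb) + ed * (wd' - wd) + ex * (wx' - wx) + ey * (wy' - wy))
  + 2 * ((wb' - wb) ^ 2 + (wd' - wd) ^ 2 + (wx' - wx) ^ 2 + (wy' - wy) ^ 2)
  + (2 / INR N * (eb - ed)) * INR c + (2 / INR N * (ed + ex - ey)) * INR R1
  + (2 / INR N * ed) * INR K + (2 / INR N * ex) * INR K1
  + (2 / INR N * ey) * INR L + (2 / INR N * ex) * INR G
  + 16 / INR N ^ 2 * (INR c ^ 2 + INR R1 ^ 2 + INR K ^ 2 + INR L ^ 2 + INR G ^ 2).
Proof.
  intros Hc HR1 HK1 eb ed ex ey. pose proof INR_N_ge2.
  unfold next_state, Sdev.
  rewrite !plus_INR, !minus_INR by lia. rewrite ?plus_INR.
  replace ((INR j + INR c) / INR N - wb')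
    with (eb + INR c / INR N - (wb' - wb)) by (unfold eb; field; lra).
  replace ((INR m - INR c + INR R1 + INR K) / INR N - wd')
    with (ed + (- INR c + INR R1 + INR K) / INR N - (wd' - wd)) by (unfold ed; field; lra).
  replace ((INR x + INR G + INR R1 + INR K1) / INR N - wx')
    with (ex + (INR G + INR R1 + INR K1) / INR N - (wx' - wx)) by (unfold ex; field; lra).
  replace ((INR y - INR R1 + INR L) / INR N - wy')
    with (ey + (INR L - INR R1) / INR N - (wy' - wy)) by (unfold ey; field; lra).
  pose proof (square_expand_le eb (INR c / INR N) (wb' - wb)).
  pose proof (square_expand_le ed ((- INR c + INR R1 + INR K) / INR N) (wd' - wd)).
  pose proof (square_expand_le ex ((INR G + INR R1 + INR K1) / INR N) (wx' - wx)).
  pose proof (square_expand_le ey ((INR L - INR R1) / INR N) (wy' - wy)).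
  assert (HK1' : INR K1 <= INR K) by (apply le_INR; auto).
  pose proof (jump_square_le (INR c) (INR R1) (INR K) (INR K1) (INR L) (INR G)
                (conj (pos_INR K1) HK1')) as H8.
  assert (Hsq : 2 * (INR c / INR N) ^ 2 + 2 * ((- INR c + INR R1 + INR K) / INR N) ^ 2
     + 2 * ((INR G + INR R1 + INR K1) / INR N) ^ 2 + 2 * ((INR L - INR R1) / INR N) ^ 2 =
     2 / INR N ^ 2 * (INR c ^ 2 + (- INR c + INR R1 + INR K) ^ 2
                      + (INR G + INR R1 + INR K1) ^ 2 + (INR L - INR R1) ^ 2))
    by (field; lra).
  assert (HN2 : 0 < 2 / INR N ^ 2) by (apply Rdiv_lt_0_compat; nra).
  pose proof (Rmult_le_compat_l _ _ _ (Rlt_le _ _ HN2) H8).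
  assert (Hlin : 2 * eb * (INR c / INR N) + 2 * ed * ((- INR c + INR R1 + INR K) / INR N)
     + 2 * ex * ((INR G + INR R1 + INR K1) / INR N) + 2 * ey * ((INR L - INR R1) / INR N) =
     (2 / INR N * (eb - ed)) * INR c + (2 / INR N * (ed + ex - ey)) * INR R1
     + (2 / INR N * ed) * INR K + (2 / INR N * ex) * INR K1
     + (2 / INR N * ey) * INR L + (2 / INR N * ex) * INR G) by (field; lra).
  assert (2 / INR N ^ 2 * (8 * (INR c ^ 2 + INR R1 ^ 2 + INR K ^ 2 + INR L ^ 2 + INR G ^ 2)) =
     16 / INR N ^ 2 * (INR c ^ 2 + INR R1 ^ 2 + INR K ^ 2 + INR L ^ 2 + INR G ^ 2))
    by (field; lra).
  lra.
Qed.

(* Drift of the squared deviation: the expectation of the pathwise bound, with the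
   means replaced by the vector field and the second moments by Cq. *)
Lemma sdev_drift j m x y wb wd wx wy wb' wd' wx' wy' : admissible (j, m, x, y) ->
  let zb := INR j / INR N in let zd := INR m / INR N in
  let zx := INR x / INR N in let zy := INR y / INR N in let h := / INR N in
  hilt_step Gam lam alpha sigma N (fun s => Sdev N s wb' wd' wx' wy') (j, m, x, y) <=
  Sdev N (j, m, x, y) wb wd wx wy
  + 2 * ((zb - wb) * (Fb zb zd zx zy h / INR N - (wb' - wb))
       + (zd - wd) * (Fd Gam zb zd zx zy h / INR N - (wd' - wd))
       + (zx - wx) * (Fx Gam (lam * alpha) (lam * sigma) zb zd zx zy h / INR N - (wx' - wx))
       + (zy - wy) * (Fy Gam (lam * alpha) (lam * sigma) zb zd zx zy h / INR N - (wy' - wy)))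
  + 2 * ((wb' - wb) ^ 2 + (wd' - wd) ^ 2 + (wx' - wx) ^ 2 + (wy' - wy) ^ 2)
  + 16 / INR N ^ 2 * Cq Gam lam alpha sigma.
Proof.
  intros HI zb zd zx zy h. pose proof INR_N_ge2.
  rewrite hilt_step_nested.
  eapply Rle_trans.
  { apply step_exp_le; auto. intros c R1 K K1 L G (Hc & HR1 & _ & HK1 & _).
    apply (sdev_next_le j m x y c R1 K K1 L G wb wd wx wy wb' wd' wx' wy'); auto. }
  repeat rewrite step_exp_plus. repeat rewrite step_exp_scal. repeat rewrite step_exp_plus.
  rewrite !step_exp_const, mean_c, mean_R1, mean_K, mean_K1, mean_L, mean_G.
  pose proof (second_moment_c _ _ _ _ HI). pose proof (second_moment_R1 _ _ _ _ HI).
  pose proof (second_moment_K _ _ _ _ HI). pose proof (second_moment_L _ _ _ _ HI).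
  pose proof (second_moment_G _ _ _ _ HI).
  unfold zb, zd, zx, zy, h.
  rewrite <- (mean_increment_d _ _ _ _ HI), <- (mean_increment_x _ _ _ _ HI),
          <- (mean_increment_y _ _ _ _ HI).
  unfold Fb, Sdev, Cq.
  apply Rplus_le_compat.
  - right. field. lra.
  - apply Rmult_le_compat_l; [apply Rlt_le, Rdiv_lt_0_compat; nra | lra].
Qed.

End Transition.

Lemma lip_const a D : 0 <= D -> Rabs (a - a) <= 0 * D.
Proof. intros. rewrite Rminus_diag, Rabs_R0. lra. Qed.

Lemma lip_add u1 u2 v1 v2 K1 K2 D : Rabs (u1 - u2) <= K1 * D -> Rabs (v1 - v2) <= K2 * D ->
  Rabs ((u1 + v1) - (u2 + v2)) <= (K1 + K2) * D.
Proof.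
  intros. replace ((u1 + v1) - (u2 + v2)) with ((u1 - u2) + (v1 - v2)) by ring.
  eapply Rle_trans; [apply Rabs_triang | lra].
Qed.

Lemma lip_sub u1 u2 v1 v2 K1 K2 D : Rabs (u1 - u2) <= K1 * D -> Rabs (v1 - v2) <= K2 * D ->
  Rabs ((u1 - v1) - (u2 - v2)) <= (K1 + K2) * D.
Proof.
  intros. replace ((u1 - v1) - (u2 - v2)) with ((u1 - u2) + - (v1 - v2)) by ring.
  eapply Rle_trans; [apply Rabs_triang|]. rewrite Rabs_Ropp. lra.
Qed.

Lemma lip_opp u1 u2 K1 D : Rabs (u1 - u2) <= K1 * D -> Rabs (- u1 - - u2) <= K1 * D.
Proof. intros. replace (- u1 - - u2) with (- (u1 - u2)) by ring. rewrite Rabs_Ropp. auto. Qed.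

Lemma lip_mul u1 u2 v1 v2 K1 K2 M1 M2 D :
  Rabs (u1 - u2) <= K1 * D -> Rabs (v1 - v2) <= K2 * D -> Rabs u1 <= M1 -> Rabs v2 <= M2 ->
  Rabs (u1 * v1 - u2 * v2) <= (M1 * K2 + M2 * K1) * D.
Proof.
  intros H1 H2 H3 H4. replace (u1 * v1 - u2 * v2) with (u1 * (v1 - v2) + v2 * (u1 - u2)) by ring.
  eapply Rle_trans; [apply Rabs_triang|]. rewrite !Rabs_mult.
  assert (Rabs u1 * Rabs (v1 - v2) <= M1 * (K2 * D))
    by (apply Rmult_le_compat; auto; apply Rabs_pos).
  assert (Rabs v2 * Rabs (u1 - u2) <= M2 * (K1 * D))
    by (apply Rmult_le_compat; auto; apply Rabs_pos).
  lra.
Qed.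

Lemma abs_mul_le u v M1 M2 : Rabs u <= M1 -> Rabs v <= M2 -> Rabs (u * v) <= M1 * M2.
Proof. intros. rewrite Rabs_mult. apply Rmult_le_compat; auto; apply Rabs_pos. Qed.

Lemma abs_add_le u v M1 M2 : Rabs u <= M1 -> Rabs v <= M2 -> Rabs (u + v) <= M1 + M2.
Proof. intros. eapply Rle_trans; [apply Rabs_triang | lra]. Qed.

Lemma abs_sub_le u v M1 M2 : Rabs u <= M1 -> Rabs v <= M2 -> Rabs (u - v) <= M1 + M2.
Proof. intros. eapply Rle_trans; [apply Rabs_triang|]. rewrite Rabs_Ropp. lra. Qed.

Lemma abs_opp_le u M1 : Rabs u <= M1 -> Rabs (- u) <= M1.
Proof. intros. rewrite Rabs_Ropp. auto. Qed.

Lemma conv_intensity_bound Gam b d h M del : 0 < Gam < 1 -> 0 < del ->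
  Rabs d <= M -> del <= 1 - h - Gam * b -> Rabs (conv_intensity Gam b d h) <= M / del.
Proof.
  intros HG Hd Hdm Hden. unfold conv_intensity, Rdiv. rewrite !Rabs_mult, Rabs_inv.
  rewrite (Rabs_pos_eq Gam), (Rabs_pos_eq (1 - h - Gam * b)) by lra.
  assert (/ (1 - h - Gam * b) <= / del) by (apply Rinv_le_contravar; lra).
  assert (0 < / (1 - h - Gam * b)) by (apply Rinv_0_lt_compat; lra).
  assert (Gam * Rabs d <= M) by (pose proof (Rabs_pos d); nra).
  apply Rmult_le_compat; try lra. apply Rmult_le_pos; [lra | apply Rabs_pos].
Qed.

Lemma conv_intensity_lip Gam b1 d1 h1 b2 d2 h2 M del D : 0 < Gam < 1 -> 0 < del ->
  Rabs d2 <= M -> Rabs b2 <= M -> Rabs h2 <= 1 ->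
  del <= 1 - h1 - Gam * b1 -> del <= 1 - h2 - Gam * b2 ->
  Rabs (d1 - d2) <= 1 * D -> Rabs (b1 - b2) <= 1 * D -> Rabs (h1 - h2) <= 1 * D ->
  Rabs (conv_intensity Gam b1 d1 h1 - conv_intensity Gam b2 d2 h2) <= ((2 + 3 * M) / del ^ 2) * D.
Proof.
  intros HG Hdel Hd2 Hb2 Hh2 Q1 Q2 Dd Db Dh.
  assert (HD0 : 0 <= D) by (pose proof (Rabs_pos (d1 - d2)); lra).
  set (q1 := 1 - h1 - Gam * b1) in *. set (q2 := 1 - h2 - Gam * b2) in *.
  assert (E1 : conv_intensity Gam b1 d1 h1 - conv_intensity Gam b2 d2 h2
               = Gam * ((d1 - d2) * q2 + d2 * (q2 - q1)) / (q1 * q2))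
    by (unfold conv_intensity; fold q1 q2; field; lra).
  rewrite E1. unfold Rdiv. rewrite Rabs_mult, Rabs_mult, Rabs_inv.
  rewrite (Rabs_pos_eq Gam), (Rabs_pos_eq (q1 * q2)) by nra.
  assert (Hq2 : Rabs q2 <= 2 + M).
  { unfold q2. eapply Rle_trans.
    - apply abs_sub_le; [apply abs_sub_le; [rewrite Rabs_R1; apply Rle_refl | exact Hh2]|].
      apply abs_mul_le; [rewrite Rabs_pos_eq by lra; apply Rle_refl | exact Hb2].
    - pose proof (Rabs_pos b2). nra. }
  assert (Hq21 : Rabs (q2 - q1) <= 2 * D).
  { replace (q2 - q1) with ((h1 - h2) + Gam * (b1 - b2)) by (unfold q1, q2; ring).
    eapply Rle_trans; [apply Rabs_triang|]. rewrite Rabs_mult, (Rabs_pos_eq Gam) by lra.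
    pose proof (Rabs_pos (b1 - b2)). nra. }
  assert (HN : Rabs ((d1 - d2) * q2 + d2 * (q2 - q1)) <= (2 + 3 * M) * D).
  { eapply Rle_trans; [apply Rabs_triang|]. rewrite !Rabs_mult.
    assert (Rabs (d1 - d2) * Rabs q2 <= (1 * D) * (2 + M))
      by (apply Rmult_le_compat; auto; apply Rabs_pos).
    assert (Rabs d2 * Rabs (q2 - q1) <= M * (2 * D))
      by (apply Rmult_le_compat; auto; apply Rabs_pos).
    nra. }
  assert (/ (q1 * q2) <= / del ^ 2) by (apply Rinv_le_contravar; nra).
  pose proof (Rabs_pos ((d1 - d2) * q2 + d2 * (q2 - q1))).
  assert (Gam * Rabs ((d1 - d2) * q2 + d2 * (q2 - q1)) <= (2 + 3 * M) * D) by nra.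
  assert (0 < / del ^ 2) by (apply Rinv_0_lt_compat; nra).
  replace ((2 + 3 * M) * / del ^ 2 * D) with (((2 + 3 * M) * D) * / del ^ 2) by ring.
  apply Rmult_le_compat; try lra.
  - apply Rmult_le_pos; [lra | apply Rabs_pos].
  - apply Rlt_le, Rinv_0_lt_compat; nra.
Qed.

Ltac bound_tac := first
 [ eapply conv_intensity_bound; eassumption
 | eapply abs_mul_le; [bound_tac | bound_tac]
 | eapply abs_add_le; [bound_tac | bound_tac]
 | eapply abs_sub_le; [bound_tac | bound_tac]
 | eapply abs_opp_le; bound_tac
 | eassumption
 | apply Rle_refl ].

Ltac lip_tac HD0 := first
 [ eapply lip_const; exact HD0
 | eapply conv_intensity_lip; eassumption
 | eapply lip_add; [lip_tac HD0 | lip_tac HD0]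
 | eapply lip_sub; [lip_tac HD0 | lip_tac HD0]
 | eapply lip_opp; lip_tac HD0
 | eapply lip_mul; [lip_tac HD0 | lip_tac HD0 | bound_tac | bound_tac]
 | eassumption ].

Definition field_lip (Gam M del : R) (F : R -> R -> R -> R -> R -> R) (L : R) : Prop :=
  forall b1 d1 x1 y1 h1 b2 d2 x2 y2 h2,
   Rabs b1 <= M -> Rabs d1 <= M -> Rabs x1 <= M -> Rabs y1 <= M -> Rabs h1 <= 1 ->
   Rabs b2 <= M -> Rabs d2 <= M -> Rabs x2 <= M -> Rabs y2 <= M -> Rabs h2 <= 1 ->
   del <= 1 - h1 - Gam * b1 -> del <= 1 - h2 - Gam * b2 ->
   Rabs (F b1 d1 x1 y1 h1 - F b2 d2 x2 y2 h2) <=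
   L * (Rabs (b1 - b2) + Rabs (d1 - d2) + Rabs (x1 - x2) + Rabs (y1 - y2) + Rabs (h1 - h2)).

Lemma sum5_dominates a1 a2 a3 a4 a5 :
  0 <= a1 -> 0 <= a2 -> 0 <= a3 -> 0 <= a4 -> 0 <= a5 ->
  0 <= a1 + a2 + a3 + a4 + a5 /\ a1 <= 1 * (a1 + a2 + a3 + a4 + a5) /\
  a2 <= 1 * (a1 + a2 + a3 + a4 + a5) /\ a3 <= 1 * (a1 + a2 + a3 + a4 + a5) /\
  a4 <= 1 * (a1 + a2 + a3 + a4 + a5) /\ a5 <= 1 * (a1 + a2 + a3 + a4 + a5).
Proof. intros. repeat split; lra. Qed.

Ltac field_lip_intro HD0 :=
  intros b1 d1 x1 y1 h1 b2 d2 x2 y2 h2 ? ? ? ? ? ? ? ? ? ? ? ?;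
  destruct (sum5_dominates _ _ _ _ _ (Rabs_pos (b1 - b2)) (Rabs_pos (d1 - d2))
              (Rabs_pos (x1 - x2)) (Rabs_pos (y1 - y2)) (Rabs_pos (h1 - h2)))
    as (HD0 & ? & ? & ? & ? & ?).

Lemma field_lip_mono Gam M del F L1 L2 :
  field_lip Gam M del F L1 -> L1 <= L2 -> field_lip Gam M del F L2.
Proof.
  intros H HL. field_lip_intro HD0.
  eapply Rle_trans; [apply H; assumption|]. apply Rmult_le_compat_r; auto.
Qed.

Lemma vector_field_lip Gam la ls M del : 0 < Gam < 1 -> 0 < del ->
  exists L, 0 <= L /\ field_lip Gam M del Fb L /\ field_lip Gam M del (Fd Gam) L /\
     field_lip Gam M del (Fx Gam la ls) L /\ field_lip Gam M del (Fy Gam la ls) L.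
Proof.
  intros HG Hdel.
  assert (exists L, field_lip Gam M del Fb L) as [L1 H1]
    by (eexists; field_lip_intro HD0; unfold Fb; eassumption).
  assert (exists L, field_lip Gam M del (Fd Gam) L) as [L2 H2]
    by (eexists; field_lip_intro HD0; unfold Fd; lip_tac HD0).
  assert (exists L, field_lip Gam M del (Fx Gam la ls) L) as [L3 H3]
    by (eexists; field_lip_intro HD0; unfold Fx; lip_tac HD0).
  assert (exists L, field_lip Gam M del (Fy Gam la ls) L) as [L4 H4]
    by (eexists; field_lip_intro HD0; unfold Fy; lip_tac HD0).
  exists (Rabs L1 + Rabs L2 + Rabs L3 + Rabs L4).
  pose proof (Rabs_pos L1). pose proof (Rabs_pos L2).
  pose proof (Rabs_pos L3). pose proof (Rabs_pos L4).
  pose proof (Rle_abs L1). pose proof (Rle_abs L2). pose proof (Rle_abs L3). pose proof (Rle_abs L4).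
  repeat split; [lra | eapply field_lip_mono; eauto; lra ..].
Qed.

Lemma vector_field_zero Gam la ls :
  Fb 0 0 0 0 0 = 0 /\ Fd Gam 0 0 0 0 0 = 0 /\ Fx Gam la ls 0 0 0 0 0 = 0 /\
  Fy Gam la ls 0 0 0 0 0 = 0.
Proof. unfold Fb, Fd, Fx, Fy, conv_intensity, Rdiv. repeat split; ring. Qed.

Lemma field_lip_linear_growth Gam M del F L : field_lip Gam M del F L -> F 0 0 0 0 0 = 0 ->
  0 <= M -> del <= 1 ->
  forall b d x y h, Rabs b <= M -> Rabs d <= M -> Rabs x <= M -> Rabs y <= M -> Rabs h <= 1 ->
  del <= 1 - h - Gam * b -> Rabs (F b d x y h) <= L * (Rabs b + Rabs d + Rabs x + Rabs y + Rabs h).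
Proof.
  intros HL H0 HM Hdel b d x y h Hb Hd Hx Hy Hh Q.
  assert (HZ : Rabs 0 <= M) by (rewrite Rabs_R0; lra).
  assert (HZ1 : Rabs 0 <= 1) by (rewrite Rabs_R0; lra).
  specialize (HL b d x y h 0 0 0 0 0 Hb Hd Hx Hy Hh HZ HZ HZ HZ HZ1 Q ltac:(lra)).
  rewrite H0, !Rminus_0_r in HL. exact HL.
Qed.

(* Comparing F at a discrete point (h = hN) with F at a point of the ODE
   trajectory (h = 0), through an intermediate point w within r of the latter. *)
Lemma field_lip_step_error Gam M del F L b1 d1 x1 y1 hN b2 d2 x2 y2 wb wd wx wy r :
  field_lip Gam M del F L -> 0 <= L -> 0 < hN <= 1 ->
  Rabs b1 <= M -> Rabs d1 <= M -> Rabs x1 <= M -> Rabs y1 <= M ->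
  Rabs b2 <= M -> Rabs d2 <= M -> Rabs x2 <= M -> Rabs y2 <= M ->
  del <= 1 - hN - Gam * b1 -> del <= 1 - 0 - Gam * b2 ->
  Rabs (wb - b2) <= r -> Rabs (wd - d2) <= r -> Rabs (wx - x2) <= r -> Rabs (wy - y2) <= r ->
  Rabs (F b1 d1 x1 y1 hN * hN - F b2 d2 x2 y2 0 * hN) <=
  L * (Rabs (b1 - wb) + Rabs (d1 - wd) + Rabs (x1 - wx) + Rabs (y1 - wy) + 4 * r + hN) * hN.
Proof.
  intros HL HL0 Hh Hb1 Hd1 Hx1 Hy1 Hb2 Hd2 Hx2 Hy2 Q1 Q2 Rb Rd Rx Ry.
  assert (Hh1 : Rabs hN <= 1) by (rewrite Rabs_pos_eq; lra).
  assert (Hh2 : Rabs 0 <= 1) by (rewrite Rabs_R0; lra).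
  specialize (HL b1 d1 x1 y1 hN b2 d2 x2 y2 0 Hb1 Hd1 Hx1 Hy1 Hh1 Hb2 Hd2 Hx2 Hy2 Hh2 Q1 Q2).
  replace (F b1 d1 x1 y1 hN * hN - F b2 d2 x2 y2 0 * hN)
    with ((F b1 d1 x1 y1 hN - F b2 d2 x2 y2 0) * hN) by ring.
  rewrite Rabs_mult, (Rabs_pos_eq hN) by lra. apply Rmult_le_compat_r; [lra|].
  eapply Rle_trans; [exact HL|]. apply Rmult_le_compat_l; [exact HL0|].
  rewrite Rminus_0_r, (Rabs_pos_eq hN) by lra.
  assert (Htri : forall a w c, Rabs (a - c) <= Rabs (a - w) + Rabs (w - c))
    by (intros a w c; replace (a - c) with ((a - w) + (w - c)) by ring; apply Rabs_triang).
  pose proof (Htri b1 wb b2). pose proof (Htri d1 wd d2).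
  pose proof (Htri x1 wx x2). pose proof (Htri y1 wy y2). lra.
Qed.

Lemma vector_field_at_h0 Gam la ls b d x y :
  Fb b d x y 0 = d /\
  Fd Gam b d x y 0 = Gam * d / (1 - Gam * b) * (1 - b - d) - d /\
  Fx Gam la ls b d x y 0 = la * (x + y) * ((b + d) - x) + Gam * d / (1 - Gam * b) * y /\
  Fy Gam la ls b d x y 0 = ls * (x + y) * (1 - (b + d) - y) - Gam * d / (1 - Gam * b) * y.
Proof.
  unfold Fb, Fd, Fx, Fy, conv_intensity. rewrite Rminus_0_r. repeat split; ring.
Qed.

Lemma ode_field_form Gam la ls (b d x y : R -> R) :
  (forall u, 0 <= u -> derivable_pt_lim b u (d u)) ->
  (forall u, 0 <= u -> derivable_pt_lim d u
     (Gam * d u / (1 - Gam * b u) * (1 - b u - d u) - d u)) ->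
  (forall u, 0 <= u -> derivable_pt_lim x u
     (la * (x u + y u) * ((b u + d u) - x u) + Gam * d u / (1 - Gam * b u) * y u)) ->
  (forall u, 0 <= u -> derivable_pt_lim y u
     (ls * (x u + y u) * (1 - (b u + d u) - y u) - Gam * d u / (1 - Gam * b u) * y u)) ->
  (forall u, 0 <= u -> derivable_pt_lim b u (Fb (b u) (d u) (x u) (y u) 0)) /\
  (forall u, 0 <= u -> derivable_pt_lim d u (Fd Gam (b u) (d u) (x u) (y u) 0)) /\
  (forall u, 0 <= u -> derivable_pt_lim x u (Fx Gam la ls (b u) (d u) (x u) (y u) 0)) /\
  (forall u, 0 <= u -> derivable_pt_lim y u (Fy Gam la ls (b u) (d u) (x u) (y u) 0)).
Proof.
  intros Hb Hd Hx Hy.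
  repeat split; intros u Hu;
    destruct (vector_field_at_h0 Gam la ls (b u) (d u) (x u) (y u)) as (E1 & E2 & E3 & E4);
    rewrite ?E1, ?E2, ?E3, ?E4; auto.
Qed.

Lemma Rabs_bounds a b : Rabs a <= b -> - b <= a <= b.
Proof. unfold Rabs. destruct (Rcase_abs a); lra. Qed.

Lemma der_cont f u l : derivable_pt_lim f u l -> continuity_pt f u.
Proof. intros H. apply derivable_continuous_pt. exists l. exact H. Qed.

Lemma cont_near f x eps : continuity_pt f x -> 0 < eps ->
  exists alp, 0 < alp /\ forall y, Rabs (y - x) < alp -> Rabs (f y - f x) < eps.
Proof.
  intros H He. destruct (H eps He) as [alp [Ha Hy]]. exists alp. split; [lra|].
  intros y Hyx. destruct (Req_dec y x) as [->|Hne].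
  - rewrite Rminus_diag, Rabs_R0. lra.
  - apply (Hy y). split; [split; [exact I | auto] | exact Hyx].
Qed.

Lemma cont_bound f a b : a <= b -> (forall c, a <= c <= b -> continuity_pt f c) ->
  exists M, 0 <= M /\ forall c, a <= c <= b -> Rabs (f c) <= M.
Proof.
  intros Hab Hc.
  destruct (continuity_ab_maj f a b Hab Hc) as [x1 [H1 Hx1]].
  destruct (continuity_ab_maj (fun c => - f c) a b Hab) as [x2 [H2 Hx2]].
  { intros c Hc'. apply (continuity_pt_opp f). auto. }
  exists (Rmax (Rabs (f x1)) (Rabs (f x2))). split.
  - eapply Rle_trans; [apply Rabs_pos | apply Rmax_l].
  - intros c Hc'. apply Rabs_le. specialize (H1 c Hc'). specialize (H2 c Hc').
    pose proof (Rmax_l (Rabs (f x1)) (Rabs (f x2))). pose proof (Rmax_r (Rabs (f x1)) (Rabs (f x2))).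
    pose proof (Rle_abs (f x1)). pose proof (Rle_abs (- f x2)). rewrite Rabs_Ropp in H4. lra.
Qed.

Lemma abs_div_le num den A beta :
  Rabs num <= A -> 0 < beta -> beta <= den -> Rabs (num / den) <= A / beta.
Proof.
  intros H1 H2 H3. unfold Rdiv. rewrite Rabs_mult, Rabs_inv, (Rabs_pos_eq den) by lra.
  apply Rmult_le_compat; try lra; [apply Rabs_pos | apply Rlt_le, Rinv_0_lt_compat; lra |].
  apply Rinv_le_contravar; lra.
Qed.

Lemma mvt_point (f f' : R -> R) a bb :
  (forall c, a <= c <= bb -> derivable_pt_lim f c (f' c)) ->
  forall u v, a <= u -> u <= v -> v <= bb ->
  exists xi, u <= xi <= v /\ f v - f u = f' xi * (v - u).
Proof.
  intros H u v Hu Huv Hv. destruct (Req_dec u v) as [->|Hne].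
  - exists v. split; [lra | ring].
  - destruct (MVT_cor2 f f' u v ltac:(lra)) as [c [Hc1 Hc2]].
    + intros c Hc. apply H. lra.
    + exists c. split; [lra | auto].
Qed.

Lemma mvt_bound (f f' : R -> R) a bb K :
  (forall c, a <= c <= bb -> derivable_pt_lim f c (f' c)) ->
  (forall c, a <= c <= bb -> Rabs (f' c) <= K) ->
  forall u v, a <= u -> u <= v -> v <= bb -> Rabs (f v - f u) <= K * (v - u).
Proof.
  intros H HK u v Hu Huv Hv. destruct (mvt_point f f' a bb H u v Hu Huv Hv) as [xi [Hxi E]].
  rewrite E, Rabs_mult, (Rabs_pos_eq (v - u)) by lra.
  apply Rmult_le_compat_r; [lra | apply HK; lra].
Qed.

Lemma sq_exp_der f f' c u : derivable_pt_lim f u f' ->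
  derivable_pt_lim (fun v => f v * f v * exp (c * v)) u
    ((2 * f u * f' + c * f u * f u) * exp (c * u)).
Proof.
  intros H.
  assert (He : derivable_pt_lim (fun v => exp (c * v)) u (c * exp (c * u))).
  { pose proof (derivable_pt_lim_comp _ exp u _ _
      (derivable_pt_lim_scal id c u 1 (derivable_pt_lim_id u)) (derivable_pt_lim_exp _)) as H2.
    unfold comp, mult_real_fct, id in H2. rewrite Rmult_comm, Rmult_1_r in H2. exact H2. }
  pose proof (derivable_pt_lim_mult _ _ u _ _ (derivable_pt_lim_mult f f u f' f' H H) He) as H3.
  unfold mult_fct in H3.
  replace ((2 * f u * f' + c * f u * f u) * exp (c * u)) with
    ((f' * f u + f u * f') * exp (c * u) + f u * f u * (c * exp (c * u))) by ring.
  exact H3.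
Qed.

Lemma sq_exp_monotone (f k : R -> R) (U K : R) :
  (forall u, 0 <= u <= U -> derivable_pt_lim f u (k u * f u)) ->
  (forall u, 0 <= u <= U -> Rabs (k u) <= K) ->
  forall v w, 0 <= v < w -> w <= U ->
  f w * f w * exp (-2 * K * w) <= f v * f v * exp (-2 * K * v) /\
  f v * f v * exp (2 * K * v) <= f w * f w * exp (2 * K * w).
Proof.
  intros Hd Hk v w Hv Hw.
  assert (Hsign : forall c s, v <= c <= w -> 0 <= s * k c + K -> s = 1 \/ s = -1 ->
     (2 * f c * (k c * f c) + (2 * s * K) * f c * f c) * exp ((2 * s * K) * c) * s >= 0).
  { intros c s Hc Hs Hs1. pose proof (exp_pos (2 * s * K * c)). pose proof (pow2_ge_0 (f c)).
    replace ((2 * f c * (k c * f c) + (2 * s * K) * f c * f c) * exp ((2 * s * K) * c) * s)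
      with (2 * (f c ^ 2) * exp ((2 * s * K) * c) * (s * k c + s * s * K)) by ring.
    destruct Hs1 as [-> | ->]; apply Rle_ge, Rmult_le_pos; nra. }
  split.
  - destruct (MVT_cor2 (fun u => f u * f u * exp ((2 * -1 * K) * u))
       (fun u => (2 * f u * (k u * f u) + (2 * -1 * K) * f u * f u) * exp ((2 * -1 * K) * u)) v w)
      as [c [Hc1 Hc2]]; [lra | intros c Hc; apply sq_exp_der, Hd; lra |].
    assert (Hkc := Hk c ltac:(lra)). apply Rabs_bounds in Hkc.
    pose proof (Hsign c (-1) ltac:(lra) ltac:(lra) (or_intror eq_refl)).
    replace (-2 * K) with (2 * -1 * K) by ring. nra.
  - destruct (MVT_cor2 (fun u => f u * f u * exp ((2 * 1 * K) * u))
       (fun u => (2 * f u * (k u * f u) + (2 * 1 * K) * f u * f u) * exp ((2 * 1 * K) * u)) v w)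
      as [c [Hc1 Hc2]]; [lra | intros c Hc; apply sq_exp_der, Hd; lra |].
    assert (Hkc := Hk c ltac:(lra)). apply Rabs_bounds in Hkc.
    pose proof (Hsign c 1 ltac:(lra) ltac:(lra) (or_introl eq_refl)).
    replace (2 * K) with (2 * 1 * K) by ring. nra.
Qed.

Lemma linear_ode_nonneg (f k : R -> R) (U K : R) :
  (forall u, 0 <= u <= U -> derivable_pt_lim f u (k u * f u)) ->
  (forall u, 0 <= u <= U -> Rabs (k u) <= K) ->
  0 <= f 0 -> forall u, 0 <= u <= U -> 0 <= f u.
Proof.
  intros Hd Hk Hf0 u Hu.
  destruct (Req_dec u 0) as [->|Hu0]; [exact Hf0|].
  pose proof (sq_exp_monotone f k U K Hd Hk) as Hmono.
  destruct (Req_dec (f 0) 0) as [Hz|Hpos].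
  - (* f 0 = 0 forces f = 0 *)
    destruct (Hmono 0 u ltac:(lra) ltac:(lra)) as [H _].
    rewrite Hz in H. pose proof (exp_pos (-2 * K * u)).
    assert (f u * f u <= 0) by nra.
    assert (f u = 0) by nra. lra.
  - (* f 0 > 0: f never vanishes, so it cannot change sign *)
    assert (Hnz : forall v, 0 < v <= u -> f v <> 0).
    { intros v Hv Hfv. destruct (Hmono 0 v ltac:(lra) ltac:(lra)) as [_ H].
      rewrite Hfv, Rmult_0_r, exp_0 in H.
      assert (0 < f 0 * f 0) by nra. lra. }
    destruct (Rle_or_lt 0 (f u)) as [H|H]; auto. exfalso.
    destruct (Ranalysis5.IVT_interv (fun v => - f v) 0 u) as [z [Hz1 Hz2]];
      [intros a Ha; apply (continuity_pt_opp f), der_cont with (k a * f a), Hd; lra | lra | lra | lra |].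
    destruct (Req_dec z 0) as [->|Hz0]; [lra|].
    apply (Hnz z); lra.
Qed.

(* A priori bound for the (b, d) subsystem: as long as 1 - Gam b > 0 on [0, U],
   both d and 1 - b - d stay nonnegative there, hence b <= 1. *)
Lemma b_le_1_on (Gam d0 : R) (b d : R -> R) :
  0 < Gam < 1 -> 0 < d0 <= 1 -> b 0 = 0 -> d 0 = d0 ->
  (forall u, 0 <= u -> derivable_pt_lim b u (d u)) ->
  (forall u, 0 <= u -> derivable_pt_lim d u (Gam * d u / (1 - Gam * b u) * (1 - b u - d u) - d u)) ->
  forall U, 0 <= U -> (forall w, 0 <= w <= U -> Gam * b w < 1) ->
  forall w, 0 <= w <= U -> b w <= 1.
Proof.
  intros HG Hd0 Hb0 Hdd0 Hb Hd U HU Hden_pos.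
  assert (Cb : forall c, 0 <= c <= U -> continuity_pt b c)
    by (intros c Hc; apply der_cont with (d c); apply Hb; lra).
  assert (Cd : forall c, 0 <= c <= U -> continuity_pt d c)
    by (intros c Hc; eapply der_cont; apply Hd; lra).
  destruct (continuity_ab_maj b 0 U HU Cb) as [wm [Hwm Hwm']].
  set (beta := 1 - Gam * b wm).
  assert (Hbeta : 0 < beta) by (unfold beta; pose proof (Hden_pos wm Hwm'); lra).
  assert (Hden : forall w, 0 <= w <= U -> beta <= 1 - Gam * b w)
    by (intros w Hw; specialize (Hwm w Hw); unfold beta; nra).
  destruct (cont_bound b 0 U HU Cb) as [Mb [HMb HMb']].
  destruct (cont_bound d 0 U HU Cd) as [Md [HMd HMd']].
  assert (Hd_nonneg : forall w, 0 <= w <= U -> 0 <= d w).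
  { apply (linear_ode_nonneg d (fun w => Gam * (1 - b w - d w) / (1 - Gam * b w) - 1) U
             (Gam * (1 + Mb + Md) / beta + 1)); [| | rewrite Hdd0; lra].
    - intros u Hu. specialize (Hden u Hu).
      replace ((Gam * (1 - b u - d u) / (1 - Gam * b u) - 1) * d u) with
        (Gam * d u / (1 - Gam * b u) * (1 - b u - d u) - d u) by (field; lra).
      apply Hd. lra.
    - intros u Hu.
      assert (H1 : Rabs (Gam * (1 - b u - d u)) <= Gam * (1 + Mb + Md)).
      { rewrite Rabs_mult, (Rabs_pos_eq Gam) by lra. apply Rmult_le_compat_l; [lra|].
        specialize (HMb' u Hu). specialize (HMd' u Hu).
        eapply Rle_trans; [apply abs_sub_le; [apply abs_sub_le|]|]; eauto.
        - rewrite Rabs_R1. apply Rle_refl.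
        - lra. }
      pose proof (abs_div_le _ _ _ _ H1 Hbeta (Hden u Hu)) as H2.
      eapply Rle_trans; [apply abs_sub_le; [exact H2 | rewrite Rabs_R1; apply Rle_refl] | lra]. }
  assert (Ha_nonneg : forall w, 0 <= w <= U -> 0 <= 1 - b w - d w).
  { apply (linear_ode_nonneg (fun w => 1 - b w - d w) (fun w => - (Gam * d w / (1 - Gam * b w)))
             U (Gam * Md / beta)); [| | rewrite Hb0, Hdd0; lra].
    - intros u Hu. specialize (Hden u Hu).
      replace (- (Gam * d u / (1 - Gam * b u)) * (1 - b u - d u)) with
         (0 - d u - (Gam * d u / (1 - Gam * b u) * (1 - b u - d u) - d u)) by (field; lra).
      apply (derivable_pt_lim_minus (fun w => 1 - b w) d); [|apply Hd; lra].
      apply (derivable_pt_lim_minus (fct_cte 1) b); [apply derivable_pt_lim_const | apply Hb; lra].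
    - intros u Hu. rewrite Rabs_Ropp. apply abs_div_le; auto.
      rewrite Rabs_mult, (Rabs_pos_eq Gam) by lra. apply Rmult_le_compat_l; [lra | auto]. }
  intros w Hw. specialize (Hd_nonneg w Hw). specialize (Ha_nonneg w Hw). lra.
Qed.

Lemma cont_le_at_end (f : R -> R) s c : 0 < s -> continuity_pt f s ->
  (forall w, 0 <= w < s -> f w <= c) -> f s <= c.
Proof.
  intros Hs Cf Hbelow. destruct (Rle_or_lt (f s) c) as [|Hfs]; auto. exfalso.
  destruct (cont_near f s (f s - c) Cf ltac:(lra)) as [alp [Halp Hn]].
  set (w := Rmax 0 (s - alp / 2)).
  assert (Hw1 : 0 <= w) by apply Rmax_l.
  assert (Hw2 : w < s) by (unfold w; apply Rmax_lub_lt; lra).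
  assert (Hw3 : Rabs (w - s) < alp)
    by (rewrite Rabs_left by lra; unfold w; pose proof (Rmax_r 0 (s - alp / 2)); lra).
  specialize (Hn w Hw3). specialize (Hbelow w (conj Hw1 Hw2)).
  apply Rabs_def2 in Hn. lra.
Qed.

Lemma cont_lt_near (f : R -> R) s c : continuity_pt f s -> f s < c ->
  exists eta, 0 < eta /\ forall w, Rabs (w - s) < eta -> f w < c.
Proof.
  intros Cf Hfs. destruct (cont_near f s (c - f s) Cf ltac:(lra)) as [eta [Heta Hn]].
  exists eta. split; [exact Heta|]. intros w Hw. specialize (Hn w Hw).
  apply Rabs_def2 in Hn. lra.
Qed.

(* Let s be the supremum of the times up to
   which b <= 1: then b <= 1 on [0, s], so Gam b < 1 slightly beyond s, and the
   hypothesis pushes the bound past s. *)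
Lemma continuous_barrier (Gam : R) (b : R -> R) :
  0 < Gam < 1 -> b 0 <= 1 -> (forall c, 0 <= c -> continuity_pt b c) ->
  (forall U, 0 <= U -> (forall w, 0 <= w <= U -> Gam * b w < 1) ->
     forall w, 0 <= w <= U -> b w <= 1) ->
  forall u, 0 <= u -> b u <= 1.
Proof.
  intros HG Hb0 Cb Hboot u1 Hu1.
  destruct (Rle_or_lt (b u1) 1) as [H|Hgt]; auto. exfalso.
  set (E := fun v => 0 <= v <= u1 /\ forall w, 0 <= w <= v -> b w <= 1).
  assert (HE0 : E 0) by (split; [lra | intros w Hw; replace w with 0 by lra; exact Hb0]).
  assert (HEb : bound E) by (exists u1; intros v [Hv _]; lra).
  destruct (completeness E HEb (ex_intro _ 0 HE0)) as [s [Hs1 Hs2]].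
  assert (Hs0 : 0 <= s) by (apply Hs1; auto).
  assert (Hbelow : forall w, 0 <= w < s -> b w <= 1).
  { intros w Hw. destruct (classic (exists v, E v /\ w < v)) as [[v [[_ Hv] Hwv]]|Hno].
    - apply Hv. lra.
    - exfalso. assert (s <= w); [|lra].
      apply Hs2. intros v Hv. destruct (Rle_or_lt v w); auto.
      exfalso. apply Hno. exists v; auto. }
  assert (Hupto : forall w, 0 <= w <= s -> b w <= 1).
  { intros w Hw. destruct (Rlt_or_le w s) as [Hws|Hws]; [apply Hbelow; lra|].
    replace w with s by lra. destruct (Req_dec s 0) as [->|Hs]; [exact Hb0|].
    apply cont_le_at_end; auto; lra. }
  assert (Hsu : s < u1)
    by (destruct (Rle_or_lt u1 s); [pose proof (Hupto u1 ltac:(lra)); lra | auto]).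
  assert (HGinv : 1 < 1 / Gam)
    by (apply Rmult_lt_reg_l with Gam; [lra|]; field_simplify; lra).
  destruct (cont_lt_near b s (1 / Gam) (Cb s Hs0) ltac:(pose proof (Hupto s ltac:(lra)); lra))
    as [eta [Heta Hnear]].
  set (eta' := Rmin (eta / 2) (u1 - s)).
  assert (Heta' : 0 < eta') by (apply Rmin_glb_lt; lra).
  assert (Heta1 : eta' <= eta / 2) by apply Rmin_l.
  assert (Heta2 : eta' <= u1 - s) by apply Rmin_r.
  assert (Hden : forall w, 0 <= w <= s + eta' -> Gam * b w < 1).
  { intros w Hw. destruct (Rle_or_lt w s) as [Hws|Hws].
    - pose proof (Hupto w ltac:(lra)). nra.
    - assert (Hbw : b w < 1 / Gam) by (apply Hnear; rewrite Rabs_right; lra).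
      replace 1 with (Gam * (1 / Gam)) by (field; lra). apply Rmult_lt_compat_l; lra. }
  assert (HE : E (s + eta')) by (split; [lra | exact (Hboot (s + eta') ltac:(lra) Hden)]).
  specialize (Hs1 _ HE). lra.
Qed.

Lemma b_le_1 (Gam d0 : R) (b d : R -> R) :
  0 < Gam < 1 -> 0 < d0 <= 1 -> b 0 = 0 -> d 0 = d0 ->
  (forall u, 0 <= u -> derivable_pt_lim b u (d u)) ->
  (forall u, 0 <= u -> derivable_pt_lim d u (Gam * d u / (1 - Gam * b u) * (1 - b u - d u) - d u)) ->
  forall u, 0 <= u -> b u <= 1.
Proof.
  intros HG Hd0 Hb0 Hdd0 Hb Hd.
  apply (continuous_barrier Gam b HG); [lra | | exact (b_le_1_on Gam d0 b d HG Hd0 Hb0 Hdd0 Hb Hd)].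
  intros c Hc. apply der_cont with (d c), Hb, Hc.
Qed.

Lemma common_bound (f g h k : R -> R) U : 0 <= U ->
  (forall c, 0 <= c <= U ->
     continuity_pt f c /\ continuity_pt g c /\ continuity_pt h c /\ continuity_pt k c) ->
  exists M, 1 <= M /\ forall u, 0 <= u <= U ->
    Rabs (f u) <= M /\ Rabs (g u) <= M /\ Rabs (h u) <= M /\ Rabs (k u) <= M.
Proof.
  intros HU Hc.
  destruct (cont_bound f 0 U HU) as [Mf [Hf0 Hf]]; [intros; apply Hc; auto|].
  destruct (cont_bound g 0 U HU) as [Mg [Hg0 Hg]]; [intros; apply Hc; auto|].
  destruct (cont_bound h 0 U HU) as [Mh [Hh0 Hh]]; [intros; apply Hc; auto|].
  destruct (cont_bound k 0 U HU) as [Mk [Hk0 Hk]]; [intros; apply Hc; auto|].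
  exists (1 + Mf + Mg + Mh + Mk). split; [lra|]. intros u Hu.
  pose proof (Hf u Hu). pose proof (Hg u Hu). pose proof (Hh u Hu). pose proof (Hk u Hu).
  repeat split; lra.
Qed.

Lemma hit_prob_bound (step : (state -> R) -> state -> R) (bad : nat -> state -> Prop)
  (I : state -> Prop) (W : nat -> state -> R) (eta : R) (ntot : nat) :
  (forall f g z, I z -> (forall s, I s -> f s <= g s) -> step f z <= step g z) ->
  (forall f a z, step (fun s => f s + a) z = step f z + a) ->
  (forall a z, step (fun _ => a) z = a) ->
  (forall t z, I z -> bad t z -> 1 <= W t z) ->
  (forall t z, I z -> 0 <= W t z) ->
  (forall t z, I z -> (t < ntot)%nat -> step (W (S t)) z <= W t z + eta) ->
  0 <= eta ->
  forall n t z, I z -> (t + n <= ntot)%nat ->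
    0 <= hit_prob step bad n t z <= W t z + INR n * eta.
Proof.
  intros Hmono Hplus Hconst Hbad HW0 Hdrift Heta.
  induction n; intros t z HI Hn; simpl hit_prob;
    destruct (excluded_middle_informative (bad t z)) as [Hb|Hb].
  - specialize (Hbad t z HI Hb). simpl. lra.
  - specialize (HW0 t z HI). simpl. lra.
  - specialize (Hbad t z HI Hb). pose proof (Rmult_le_pos _ _ (pos_INR (S n)) Heta). lra.
  - split.
    + rewrite <- (Hconst 0 z). apply Hmono; auto. intros s Hs. apply (IHn (S t) s Hs). lia.
    + apply Rle_trans with (step (fun s => W (S t) s + INR n * eta) z).
      * apply Hmono; auto. intros s Hs. apply (IHn (S t) s Hs). lia.
      * rewrite Hplus. specialize (Hdrift t z HI ltac:(lia)). rewrite S_INR. lra.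
Qed.

Lemma pow_exp_bound C N t : 0 <= C -> 0 < INR N ->
  (1 + C / INR N) ^ t <= exp (C * INR t / INR N).
Proof.
  intros HC HN.
  assert (H1 : 1 + C / INR N <= exp (C / INR N)).
  { destruct (Req_dec (C / INR N) 0) as [E|E]; [rewrite E, exp_0; lra|].
    pose proof (exp_ineq1 _ E). lra. }
  assert (H0 : 0 <= C / INR N) by (apply Rdiv_nonneg; lra).
  eapply Rle_trans; [apply pow_incr; split; [lra | exact H1]|].
  right. induction t as [|t IHt].
  - simpl. rewrite Rmult_0_r, Rdiv_0_l, exp_0. reflexivity.
  - rewrite S_INR, <- tech_pow_Rmult, IHt, <- exp_plus. f_equal. field. lra.
Qed.

Lemma nat_above K : exists N0, forall N, (N >= N0)%nat -> K < INR N.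
Proof.
  destruct (archimed (Rabs K)) as [H1 H2].
  exists (Z.to_nat (up (Rabs K))). intros N HN.
  assert (Hz : (0 <= up (Rabs K))%Z) by (apply le_IZR; pose proof (Rabs_pos K); simpl; lra).
  apply le_INR in HN. rewrite INR_IZR_INZ, Z2Nat.id in HN by auto.
  pose proof (Rle_abs K). lra.
Qed.

Lemma int_part_to_nat_le r : 0 <= r -> INR (Z.to_nat (Int_part r)) <= r.
Proof.
  intros Hr. destruct (base_Int_part r) as [H1 H2].
  destruct (Z_le_gt_dec 0 (Int_part r)) as [Hz|Hz].
  - rewrite INR_IZR_INZ, Z2Nat.id by auto. auto.
  - destruct (Int_part r) eqn:E; try lia. rewrite Z2Nat.inj_neg. simpl. auto.
Qed.

Lemma int_part_nat r t : Int_part r = Z.of_nat t -> INR t <= r < INR t + 1.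
Proof.
  intros H. destruct (base_Int_part r) as [H1 H2]. rewrite H, <- INR_IZR_INZ in H1, H2. lra.
Qed.

Lemma dev_gt_component N z b d x y u eps : dev N z b d x y u > eps ->
  let '(B, D, X, Y) := z in
  Rabs (INR B / INR N - b u) > eps \/ Rabs (INR D / INR N - d u) > eps \/
  Rabs (INR X / INR N - x u) > eps \/ Rabs (INR Y / INR N - y u) > eps.
Proof.
  destruct z as [[[B D] X] Y]. unfold dev. intros H.
  destruct (Rgt_dec (Rabs (INR B / INR N - b u)) eps); [left; auto|].
  destruct (Rgt_dec (Rabs (INR D / INR N - d u)) eps); [right; left; auto|].
  destruct (Rgt_dec (Rabs (INR X / INR N - x u)) eps); [right; right; left; auto|].
  destruct (Rgt_dec (Rabs (INR Y / INR N - y u)) eps); [right; right; right; auto|].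
  exfalso. apply Rnot_gt_le in n, n0, n1, n2.
  assert (Rmax (Rmax (Rabs (INR B / INR N - b u)) (Rabs (INR D / INR N - d u)))
       (Rmax (Rabs (INR X / INR N - x u)) (Rabs (INR Y / INR N - y u))) <= eps)
    by (apply Rmax_lub; apply Rmax_lub; auto).
  lra.
Qed.

(* Algebra behind the one-step estimate: cross terms e . m, with each |m| at most
   L (|e|_1 + c h) h, and squared ODE increments of size M1 h, add up to at most
   |e|^2 O(h) + O(h^2). *)
Lemma drift_combination eb ed ex ey mb md mx my db dd dx dy L c M1 h :
  0 <= L -> 0 <= c -> 0 < h <= 1 ->
  let E1 := Rabs eb + Rabs ed + Rabs ex + Rabs ey in
  Rabs mb <= L * (E1 + c * h) * h -> Rabs md <= L * (E1 + c * h) * h ->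
  Rabs mx <= L * (E1 + c * h) * h -> Rabs my <= L * (E1 + c * h) * h ->
  Rabs db <= M1 * h -> Rabs dd <= M1 * h -> Rabs dx <= M1 * h -> Rabs dy <= M1 * h ->
  2 * (eb * mb + ed * md + ex * mx + ey * my) + 2 * (db ^ 2 + dd ^ 2 + dx ^ 2 + dy ^ 2) <=
  (eb ^ 2 + ed ^ 2 + ex ^ 2 + ey ^ 2) * ((8 * L + 2 * L * c) * h) + (4 * L * c + 8 * M1 ^ 2) * h ^ 2.
Proof.
  intros HL Hc Hh E1 Hmb Hmd Hmx Hmy Hdb Hdd Hdx Hdy.
  set (S := eb ^ 2 + ed ^ 2 + ex ^ 2 + ey ^ 2).
  set (B := L * (E1 + c * h) * h).
  assert (HE0 : 0 <= E1)
    by (unfold E1; pose proof (Rabs_pos eb); pose proof (Rabs_pos ed);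
        pose proof (Rabs_pos ex); pose proof (Rabs_pos ey); lra).
  assert (Hem : forall e m, Rabs m <= B -> e * m <= Rabs e * B).
  { intros e m Hm. eapply Rle_trans; [apply Rle_abs|]. rewrite Rabs_mult.
    apply Rmult_le_compat_l; auto. apply Rabs_pos. }
  pose proof (Hem eb mb Hmb) as P1. pose proof (Hem ed md Hmd) as P2.
  pose proof (Hem ex mx Hmx) as P3. pose proof (Hem ey my Hmy) as P4.
  assert (HH1 : 2 * (eb * mb + ed * md + ex * mx + ey * my) <= 2 * E1 * B) by (unfold E1; lra).
  assert (HE2 : E1 ^ 2 <= 4 * S).
  { unfold E1, S. rewrite <- (pow2_abs eb), <- (pow2_abs ed), <- (pow2_abs ex), <- (pow2_abs ey).
    set (a1 := Rabs eb). set (a2 := Rabs ed). set (a3 := Rabs ex). set (a4 := Rabs ey).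
    pose proof (pow2_ge_0 (a1 - a2)). pose proof (pow2_ge_0 (a1 - a3)).
    pose proof (pow2_ge_0 (a1 - a4)). pose proof (pow2_ge_0 (a2 - a3)).
    pose proof (pow2_ge_0 (a2 - a4)). pose proof (pow2_ge_0 (a3 - a4)). nra. }
  assert (HE1 : E1 <= 2 + S).
  { unfold E1, S.
    assert (Q : forall e, Rabs e <= (1 + e ^ 2) / 2).
    { intros e. rewrite <- (pow2_abs e). pose proof (pow2_ge_0 (Rabs e - 1)). nra. }
    pose proof (Q eb). pose proof (Q ed). pose proof (Q ex). pose proof (Q ey).
    pose proof (pow2_ge_0 eb). pose proof (pow2_ge_0 ed).
    pose proof (pow2_ge_0 ex). pose proof (pow2_ge_0 ey). lra. }
  assert (HB : 2 * E1 * B = 2 * L * h * E1 ^ 2 + 2 * L * c * h ^ 2 * E1) by (unfold B; ring).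
  assert (HS0 : 0 <= S) by (unfold S; nra).
  assert (HH2 : 2 * L * h * E1 ^ 2 <= 2 * L * h * (4 * S))
    by (apply Rmult_le_compat_l; [nra | lra]).
  assert (H3' : 2 * L * c * h ^ 2 * E1 <= 2 * L * c * h ^ 2 * (2 + S))
    by (apply Rmult_le_compat_l; [apply Rmult_le_pos; nra | lra]).
  assert (Hd : 2 * (db ^ 2 + dd ^ 2 + dx ^ 2 + dy ^ 2) <= 8 * M1 ^ 2 * h ^ 2).
  { assert (Q : forall q, Rabs q <= M1 * h -> q ^ 2 <= M1 ^ 2 * h ^ 2).
    { intros q Hq. rewrite <- (pow2_abs q). pose proof (Rabs_pos q).
      replace (M1 ^ 2 * h ^ 2) with ((M1 * h) * (M1 * h)) by ring.
      simpl. rewrite Rmult_1_r. apply Rmult_le_compat; lra. }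
    pose proof (Q db Hdb). pose proof (Q dd Hdd). pose proof (Q dx Hdx). pose proof (Q dy Hdy).
    lra. }
  assert (Hh2 : 2 * L * c * h ^ 2 * S <= 2 * L * c * h * S).
  { assert (h ^ 2 <= h) by nra. assert (0 <= 2 * L * c * S) by (apply Rmult_le_pos; [nra | lra]).
    nra. }
  nra.
Qed.

Lemma far_from_shifted s w w0 eps : 0 <= eps ->
  Rabs (s - w) > eps -> Rabs (w - w0) <= eps / 2 -> eps ^ 2 / 4 <= (s - w0) ^ 2.
Proof.
  intros Heps H1 H2.
  assert (H3 : Rabs (s - w0) >= eps / 2).
  { replace (s - w) with ((s - w0) + - (w - w0)) in H1 by ring.
    pose proof (Rabs_triang (s - w0) (- (w - w0))) as H4. rewrite Rabs_Ropp in H4. lra. }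
  rewrite <- (pow2_abs (s - w0)).
  replace (eps ^ 2 / 4) with ((eps / 2) ^ 2) by field.
  apply pow_incr. lra.
Qed.

Lemma Sdev_nonneg N z wb wd wx wy : 0 <= Sdev N z wb wd wx wy.
Proof.
  destruct z as [[[B D] X] Y]. unfold Sdev.
  pose proof (pow2_ge_0 (INR B / INR N - wb)). pose proof (pow2_ge_0 (INR D / INR N - wd)).
  pose proof (pow2_ge_0 (INR X / INR N - wx)). pose proof (pow2_ge_0 (INR Y / INR N - wy)). lra.
Qed.

Lemma Rdiv_le_of_le_mul a c n : 0 < c -> 0 < n -> a / c <= n -> a / n <= c.
Proof.
  intros Hc Hn H. apply Rmult_le_reg_r with (n / c); [apply Rdiv_lt_0_compat; lra|].
  replace (a / n * (n / c)) with (a / c) by (field; lra).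
  replace (c * (n / c)) with n by (field; lra). exact H.
Qed.

Definition den_margin (Gam : R) : R := (1 - Gam) / 4.

Section FluidApproximation.

Variables (Gam lam alpha sigma : R).
Hypothesis hGam : 0 < Gam < 1.
Hypothesis hla : 0 <= lam * alpha.
Hypothesis hls : 0 <= lam * sigma.

Variables (b d x y : R -> R) (T : R).
Hypothesis hT : 0 < T.
Hypothesis Db : forall u, 0 <= u -> derivable_pt_lim b u (Fb (b u) (d u) (x u) (y u) 0).
Hypothesis Dd : forall u, 0 <= u -> derivable_pt_lim d u (Fd Gam (b u) (d u) (x u) (y u) 0).
Hypothesis Dx : forall u, 0 <= u ->
  derivable_pt_lim x u (Fx Gam (lam * alpha) (lam * sigma) (b u) (d u) (x u) (y u) 0).
Hypothesis Dy : forall u, 0 <= u ->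
  derivable_pt_lim y u (Fy Gam (lam * alpha) (lam * sigma) (b u) (d u) (x u) (y u) 0).
Hypothesis hb1 : forall u, 0 <= u -> b u <= 1.

Variables (M L : R).
Hypothesis hM : 1 <= M.
Hypothesis hbM : forall u, 0 <= u <= T + 1 -> Rabs (b u) <= M.
Hypothesis hdM : forall u, 0 <= u <= T + 1 -> Rabs (d u) <= M.
Hypothesis hxM : forall u, 0 <= u <= T + 1 -> Rabs (x u) <= M.
Hypothesis hyM : forall u, 0 <= u <= T + 1 -> Rabs (y u) <= M.
Hypothesis hL : 0 <= L.
Hypothesis LFb : field_lip Gam M (den_margin Gam) Fb L.
Hypothesis LFd : field_lip Gam M (den_margin Gam) (Fd Gam) L.
Hypothesis LFx : field_lip Gam M (den_margin Gam) (Fx Gam (lam * alpha) (lam * sigma)) L.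
Hypothesis LFy : field_lip Gam M (den_margin Gam) (Fy Gam (lam * alpha) (lam * sigma)) L.

Definition speed : R := L * (4 * M).
Definition drift_rate : R := 8 * L + 2 * L * (4 * speed + 1).
Definition drift_const : R :=
  4 * L * (4 * speed + 1) + 8 * speed ^ 2 + 16 * Cq Gam lam alpha sigma.

Lemma speed_nonneg : 0 <= speed.
Proof. unfold speed. nra. Qed.

Definition is_component (f : R -> R) (F : R -> R -> R -> R -> R -> R) : Prop :=
  (forall u, 0 <= u -> derivable_pt_lim f u (F (b u) (d u) (x u) (y u) 0)) /\
  field_lip Gam M (den_margin Gam) F L /\ F 0 0 0 0 0 = 0.

Lemma components :
  is_component b Fb /\ is_component d (Fd Gam) /\
  is_component x (Fx Gam (lam * alpha) (lam * sigma)) /\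
  is_component y (Fy Gam (lam * alpha) (lam * sigma)).
Proof.
  destruct (vector_field_zero Gam (lam * alpha) (lam * sigma)) as (Hb & Hd & Hx & Hy).
  unfold is_component. tauto.
Qed.

Lemma trajectory_den u : 0 <= u -> den_margin Gam <= 1 - 0 - Gam * b u.
Proof. intros Hu. specialize (hb1 u Hu). unfold den_margin. nra. Qed.

Lemma trajectory_speed f F : is_component f F ->
  forall u v, 0 <= u -> u <= v -> v <= T + 1 -> Rabs (f v - f u) <= speed * (v - u).
Proof.
  intros (Hf & HF & HF0).
  apply (mvt_bound f (fun u => F (b u) (d u) (x u) (y u) 0) 0 (T + 1));
    [intros; apply Hf; lra|].
  intros u Hu.
  eapply Rle_trans.
  - apply (field_lip_linear_growth Gam M (den_margin Gam) F L HF HF0);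
      [lra | unfold den_margin; lra | auto .. | rewrite Rabs_R0; lra | apply trajectory_den; lra].
  - rewrite Rabs_R0. unfold speed. apply Rmult_le_compat_l; [exact hL|].
    pose proof (hbM u Hu). pose proof (hdM u Hu). pose proof (hxM u Hu). pose proof (hyM u Hu). lra.
Qed.

Lemma trajectory_close u v : 0 <= u -> u <= v -> v <= T + 1 ->
  Rabs (b u - b v) <= speed * (v - u) /\ Rabs (d u - d v) <= speed * (v - u) /\
  Rabs (x u - x v) <= speed * (v - u) /\ Rabs (y u - y v) <= speed * (v - u).
Proof.
  intros Hu Huv Hv. destruct components as (Cb & Cd & Cx & Cy).
  rewrite (Rabs_minus_sym (b u)), (Rabs_minus_sym (d u)), (Rabs_minus_sym (x u)),
    (Rabs_minus_sym (y u)).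
  repeat split; [apply (trajectory_speed b Fb) | apply (trajectory_speed d (Fd Gam))
                | apply (trajectory_speed x (Fx Gam (lam * alpha) (lam * sigma)))
                | apply (trajectory_speed y (Fy Gam (lam * alpha) (lam * sigma)))]; auto.
Qed.

Definition large_enough (N : nat) : Prop :=
  (2 <= N)%nat /\ Gam * INR N / (INR N - 1) <= (1 + Gam) / 2 /\
  lam * alpha <= INR N /\ lam * sigma <= INR N /\ / INR N <= (1 - Gam) / 2.

Lemma scaled_state_in_region N j m xx yy : large_enough N -> admissible N (j, m, xx, yy) ->
  Rabs (INR j / INR N) <= M /\ Rabs (INR m / INR N) <= M /\
  Rabs (INR xx / INR N) <= M /\ Rabs (INR yy / INR N) <= M /\
  den_margin Gam <= 1 - / INR N - Gam * (INR j / INR N).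
Proof.
  intros (HN & _ & _ & _ & Hh) HI. simpl in HI.
  assert (HNpos : 0 < INR N) by (apply lt_0_INR; lia).
  assert (Sc : forall k, (k <= N)%nat -> 0 <= INR k / INR N <= 1).
  { intros k Hk. split; [apply Rdiv_nonneg; [apply pos_INR | lra]|].
    apply le_INR in Hk. apply Rmult_le_reg_r with (INR N); [lra|].
    unfold Rdiv. rewrite Rmult_assoc, Rinv_l by lra. lra. }
  pose proof (Sc j ltac:(lia)). pose proof (Sc m ltac:(lia)).
  pose proof (Sc xx ltac:(lia)). pose proof (Sc yy ltac:(lia)).
  rewrite !Rabs_pos_eq by lra. unfold den_margin. repeat split; nra.
Qed.

Lemma increment_error f F N j m xx yy u0 : is_component f F ->
  large_enough N -> admissible N (j, m, xx, yy) -> 0 <= u0 -> u0 + / INR N <= T + 1 ->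
  let E1 := Rabs (INR j / INR N - b u0) + Rabs (INR m / INR N - d u0)
          + Rabs (INR xx / INR N - x u0) + Rabs (INR yy / INR N - y u0) in
  Rabs (F (INR j / INR N) (INR m / INR N) (INR xx / INR N) (INR yy / INR N) (/ INR N) / INR N
        - (f (u0 + / INR N) - f u0))
  <= L * (E1 + (4 * speed + 1) * / INR N) * / INR N.
Proof.
  intros Hcomp Hlarge HI Hu0 Hu1 E1.
  pose proof Hcomp as (Hf & HF & _).
  assert (HN : 0 < / INR N <= 1)
    by (destruct Hlarge as (HN & _); split; [apply Rinv_0_lt_compat, lt_0_INR | apply invN_range]; lia).
  destruct (mvt_point f (fun u => F (b u) (d u) (x u) (y u) 0) 0 (T + 1)
              ltac:(intros; apply Hf; lra) u0 (u0 + / INR N) Hu0 ltac:(lra) Hu1) as [xi [Hxi ->]].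
  destruct (scaled_state_in_region N j m xx yy Hlarge HI) as (Sb & Sd & Sx & Sy & Sden).
  destruct (trajectory_close u0 xi Hu0 ltac:(lra) ltac:(lra)) as (Rb & Rd & Rx & Ry).
  assert (Hr : speed * (xi - u0) <= speed * / INR N)
    by (apply Rmult_le_compat_l; [apply speed_nonneg | lra]).
  replace (u0 + / INR N - u0) with (/ INR N) by ring. unfold Rdiv.
  eapply Rle_trans;
    [apply (field_lip_step_error Gam M (den_margin Gam) F L _ _ _ _ _ _ _ _ _
              (b u0) (d u0) (x u0) (y u0) (speed * / INR N));
     try apply hbM; try apply hdM; try apply hxM; try apply hyM; try apply trajectory_den; auto; lra|].
  right. unfold E1, Rdiv. ring.
Qed.

Definition sdev_at (N t : nat) (z : state) : R :=
  Sdev N z (b (INR t / INR N)) (d (INR t / INR N)) (x (INR t / INR N)) (y (INR t / INR N)).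

Lemma one_step_drift N t j m xx yy : large_enough N -> admissible N (j, m, xx, yy) ->
  INR t < INR N * T ->
  hilt_step Gam lam alpha sigma N (sdev_at N (S t)) (j, m, xx, yy) <=
  sdev_at N t (j, m, xx, yy) * (1 + drift_rate / INR N) + drift_const / INR N ^ 2.
Proof.
  intros Hlarge HI Ht. pose proof Hlarge as (HN & Hg & Ha & Hs & Hh).
  assert (HNpos : 2 <= INR N) by (apply le_INR in HN; simpl in HN; lra).
  assert (Hh0 : 0 < / INR N <= 1) by (split; [apply Rinv_0_lt_compat | apply invN_range]; lia || lra).
  set (u0 := INR t / INR N).
  assert (Hu0 : 0 <= u0) by (apply Rdiv_nonneg; [apply pos_INR | lra]).
  assert (Hu1 : u0 + / INR N <= T + 1).
  { assert (u0 < T); [|lra]. apply Rmult_lt_reg_r with (INR N); [lra|].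
    unfold u0, Rdiv. rewrite Rmult_assoc, Rinv_l by lra. lra. }
  unfold sdev_at. replace (INR (S t) / INR N) with (u0 + / INR N)
    by (unfold u0; rewrite S_INR; field; lra).
  eapply Rle_trans;
    [apply (sdev_drift Gam lam alpha sigma N) with (wb := b u0) (wd := d u0) (wx := x u0) (wy := y u0);
     auto|].
  cbv zeta. fold u0.
  destruct components as (Cb & Cd & Cx & Cy).
  pose proof (increment_error _ _ _ _ _ _ _ u0 Cb Hlarge HI Hu0 Hu1) as Kb.
  pose proof (increment_error _ _ _ _ _ _ _ u0 Cd Hlarge HI Hu0 Hu1) as Kd.
  pose proof (increment_error _ _ _ _ _ _ _ u0 Cx Hlarge HI Hu0 Hu1) as Kx.
  pose proof (increment_error _ _ _ _ _ _ _ u0 Cy Hlarge HI Hu0 Hu1) as Ky.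
  destruct (trajectory_close u0 (u0 + / INR N) Hu0 ltac:(lra) Hu1) as (Wb & Wd & Wx & Wy).
  replace (u0 + / INR N - u0) with (/ INR N) in Wb, Wd, Wx, Wy by ring.
  rewrite Rabs_minus_sym in Wb, Wd, Wx, Wy.
  pose proof (drift_combination _ _ _ _ _ _ _ _ _ _ _ _ L (4 * speed + 1) speed (/ INR N)
                hL ltac:(pose proof speed_nonneg; lra) Hh0 Kb Kd Kx Ky Wb Wd Wx Wy) as Hcomb.
  unfold Sdev, drift_rate, drift_const.
  assert (Ealg : forall S, S * (1 + (8 * L + 2 * L * (4 * speed + 1)) / INR N)
                   = S + S * ((8 * L + 2 * L * (4 * speed + 1)) * / INR N))
    by (intros; field; lra).
  assert (Econst : (4 * L * (4 * speed + 1) + 8 * speed ^ 2 + 16 * Cq Gam lam alpha sigma) / INR N ^ 2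
     = (4 * L * (4 * speed + 1) + 8 * speed ^ 2) * (/ INR N) ^ 2
       + 16 / INR N ^ 2 * Cq Gam lam alpha sigma) by (field; lra).
  rewrite Ealg, Econst. lra.
Qed.


Lemma drift_constants_nonneg : 0 <= drift_rate /\ 0 <= drift_const.
Proof.
  pose proof speed_nonneg. pose proof (kp_pos Gam hGam).
  assert (0 <= Cq Gam lam alpha sigma) by (unfold Cq; nra).
  unfold drift_rate, drift_const. split; nra.
Qed.

(* If the max-norm deviation exceeds eps at some u with floor(N u) = t, then the
   squared deviation at the grid time t / N is at least eps^2 / 4 (the solution
   moves by at most eps / 2 in time 1 / N). *)
Lemma bad_implies_far N eps t z : 0 < INR N -> 0 < eps -> speed / INR N <= eps / 2 ->
  bad_at N T eps b d x y t z -> INR t <= INR N * T /\ eps ^ 2 / 4 <= sdev_at N t z.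
Proof.
  intros HN Heps Hspeed [u [Hu [Hint Hdev]]].
  destruct (int_part_nat _ _ Hint) as [Hi1 Hi2].
  set (u0 := INR t / INR N).
  assert (Hu0 : 0 <= u0) by (apply Rdiv_nonneg; [apply pos_INR | lra]).
  assert (Hu0u : u0 <= u)
    by (apply Rmult_le_reg_r with (INR N); [lra|]; unfold u0, Rdiv;
        rewrite Rmult_assoc, Rinv_l by lra; lra).
  assert (Huu0 : u - u0 <= / INR N).
  { apply Rmult_le_reg_r with (INR N); [lra|].
    replace ((u - u0) * INR N) with (INR N * u - INR t) by (unfold u0; field; lra).
    rewrite Rinv_l by lra. lra. }
  split; [nra|].
  assert (Hclose : speed * (u - u0) <= eps / 2).
  { pose proof speed_nonneg.
    assert (speed * (u - u0) <= speed * / INR N) by (apply Rmult_le_compat_l; lra). lra. }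
  destruct (trajectory_close u0 u Hu0 Hu0u ltac:(lra)) as (Rb & Rd & Rx & Ry).
  pose proof (dev_gt_component N z b d x y u eps Hdev) as Hg.
  unfold sdev_at. fold u0. destruct z as [[[B D] X] Y]. unfold Sdev.
  pose proof (pow2_ge_0 (INR B / INR N - b u0)). pose proof (pow2_ge_0 (INR D / INR N - d u0)).
  pose proof (pow2_ge_0 (INR X / INR N - x u0)). pose proof (pow2_ge_0 (INR Y / INR N - y u0)).
  rewrite Rabs_minus_sym in Rb, Rd, Rx, Ry.
  destruct Hg as [Hg|[Hg|[Hg|Hg]]].
  - pose proof (far_from_shifted _ _ (b u0) eps ltac:(lra) Hg ltac:(lra)). lra.
  - pose proof (far_from_shifted _ _ (d u0) eps ltac:(lra) Hg ltac:(lra)). lra.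
  - pose proof (far_from_shifted _ _ (x u0) eps ltac:(lra) Hg ltac:(lra)). lra.
  - pose proof (far_from_shifted _ _ (y u0) eps ltac:(lra) Hg ltac:(lra)). lra.
Qed.


(* Discounted squared deviation W t z = weight (1 + C/N)^(-t) S(t, z): the discount
   absorbs the linear growth in [one_step_drift], the weight makes W >= 1 on the
   bad set. *)
Definition weight (eps : R) : R := 4 * exp (drift_rate * T) / eps ^ 2.
Definition discount (N : nat) : R := 1 + drift_rate / INR N.
Definition lyapunov (eps : R) (N t : nat) (z : state) : R :=
  weight eps * / discount N ^ t * sdev_at N t z.

Lemma weight_pos eps : 0 < eps -> 0 < weight eps.
Proof.
  intros Heps. unfold weight. pose proof (exp_pos (drift_rate * T)).
  apply Rdiv_lt_0_compat; nra.
Qed.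

Lemma discount_facts N : 0 < INR N -> 1 <= discount N /\ forall t, 0 < / discount N ^ t <= 1.
Proof.
  intros HN. destruct drift_constants_nonneg as [HC _].
  assert (Hq1 : 1 <= discount N)
    by (unfold discount; pose proof (Rdiv_nonneg drift_rate (INR N) HC HN); lra).
  split; [exact Hq1|]. intros t. pose proof (pow_R1_Rle (discount N) t Hq1).
  split; [apply Rinv_0_lt_compat; lra|].
  rewrite <- Rinv_1. apply Rinv_le_contravar; lra.
Qed.

Lemma lyapunov_nonneg eps N t z : 0 < eps -> 0 < INR N -> 0 <= lyapunov eps N t z.
Proof.
  intros Heps HN. unfold lyapunov, sdev_at.
  pose proof (weight_pos eps Heps). pose proof (proj2 (discount_facts N HN) t).
  pose proof (Sdev_nonneg N z (b (INR t / INR N)) (d (INR t / INR N))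
                (x (INR t / INR N)) (y (INR t / INR N))).
  apply Rmult_le_pos; [apply Rmult_le_pos|]; lra.
Qed.

(* On the bad set, S >= eps^2 / 4 and the discount is at most exp (C T). *)
Lemma lyapunov_bad eps N t z : 0 < eps -> 0 < INR N -> speed / INR N <= eps / 2 ->
  bad_at N T eps b d x y t z -> 1 <= lyapunov eps N t z.
Proof.
  intros Heps HN Hspeed Hb.
  destruct drift_constants_nonneg as [HC _]. destruct (discount_facts N HN) as [Hq1 _].
  destruct (bad_implies_far N eps t z HN Heps Hspeed Hb) as [Ht Hfar].
  assert (Hqexp : discount N ^ t <= exp (drift_rate * T)).
  { eapply Rle_trans; [apply pow_exp_bound; lra|].
    destruct (Rle_lt_or_eq_dec (drift_rate * INR t / INR N) (drift_rate * T)) as [Hlt|Heq].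
    - apply Rmult_le_reg_r with (INR N); [lra|]. unfold Rdiv.
      rewrite Rmult_assoc, Rinv_l by lra. nra.
    - left. apply exp_increasing, Hlt.
    - rewrite Heq. lra. }
  pose proof (pow_lt (discount N) t ltac:(lra)) as Hqp.
  assert (Hw : 4 / eps ^ 2 <= weight eps * / discount N ^ t).
  { apply Rmult_le_reg_r with (discount N ^ t); [lra|].
    rewrite Rmult_assoc, Rinv_l, Rmult_1_r by lra.
    unfold weight. replace (4 * exp (drift_rate * T) / eps ^ 2)
      with (4 / eps ^ 2 * exp (drift_rate * T)) by (field; lra).
    apply Rmult_le_compat_l; [apply Rdiv_nonneg; nra | lra]. }
  unfold lyapunov. replace 1 with (4 / eps ^ 2 * (eps ^ 2 / 4)) by (field; lra).
  apply Rmult_le_compat; [apply Rdiv_nonneg; nra | nra | exact Hw | exact Hfar].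
Qed.

Lemma lyapunov_drift eps N t z : 0 < eps -> large_enough N -> admissible N z ->
  INR t < INR N * T ->
  hilt_step Gam lam alpha sigma N (lyapunov eps N (S t)) z <=
  lyapunov eps N t z + weight eps * drift_const / INR N ^ 2.
Proof.
  intros Heps Hlarge HI Ht. destruct z as [[[j m] xx] yy].
  assert (HN : 0 < INR N) by (destruct Hlarge as (HN & _); apply lt_0_INR; lia).
  destruct (discount_facts N HN) as [Hq1 Hqt].
  destruct drift_constants_nonneg as [_ HC'].
  pose proof (weight_pos eps Heps).
  unfold lyapunov. rewrite step_scal.
  pose proof (one_step_drift N t j m xx yy Hlarge HI Ht) as Hstep. fold (discount N) in Hstep.
  pose proof (Hqt (S t)) as [Hq0 Hle]. pose proof (pow_lt (discount N) t ltac:(lra)) as Hqp.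
  eapply Rle_trans; [apply Rmult_le_compat_l; [apply Rmult_le_pos; lra | exact Hstep]|].
  assert (E1 : weight eps * / discount N ^ S t * (sdev_at N t (j, m, xx, yy) * discount N)
               = weight eps * / discount N ^ t * sdev_at N t (j, m, xx, yy))
    by (simpl pow; field; split; lra).
  assert (E2 : weight eps * / discount N ^ S t * (drift_const / INR N ^ 2)
               <= weight eps * drift_const / INR N ^ 2).
  { replace (weight eps * / discount N ^ S t * (drift_const / INR N ^ 2))
      with (/ discount N ^ S t * (weight eps * drift_const / INR N ^ 2)) by (unfold Rdiv; ring).
    rewrite <- (Rmult_1_l (weight eps * drift_const / INR N ^ 2)) at 2.
    apply Rmult_le_compat_r; [apply Rdiv_nonneg; nra | exact Hle]. }
  rewrite Rmult_plus_distr_l, E1. lra.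
Qed.

Lemma hitting_estimate N eps D0 X0 Y0 : large_enough N -> 0 < eps ->
  speed / INR N <= eps / 2 -> admissible N (0%nat, D0, X0, Y0) ->
  0 <= dev_prob Gam lam alpha sigma N D0 X0 Y0 T eps b d x y <=
  weight eps * sdev_at N 0 (0%nat, D0, X0, Y0) + weight eps * drift_const * T / INR N.
Proof.
  intros Hlarge Heps Hspeed HI0. pose proof Hlarge as (HN & Hg & Ha & Hs & _).
  assert (HNpos : 2 <= INR N) by (apply le_INR in HN; simpl in HN; lra).
  destruct drift_constants_nonneg as [_ HC']. pose proof (weight_pos eps Heps).
  set (ntot := Z.to_nat (Int_part (INR N * T))).
  pose proof (int_part_to_nat_le (INR N * T) ltac:(nra)) as Hntot. fold ntot in Hntot.
  destruct (hit_prob_bound (hilt_step Gam lam alpha sigma N) (bad_at N T eps b d x y)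
     (admissible N) (lyapunov eps N) (weight eps * drift_const / INR N ^ 2) ntot
     (fun f g z Hz Hfg => step_le Gam lam alpha sigma N hGam hla hls HN Hg Ha Hs z f g Hz Hfg)
     (fun f a z => step_plus_const Gam lam alpha sigma N z f a)
     (fun a z => step_const Gam lam alpha sigma N z a)
     (fun t z _ => lyapunov_bad eps N t z Heps ltac:(lra) Hspeed)
     (fun t z _ => lyapunov_nonneg eps N t z Heps ltac:(lra))
     (fun t z Hz Ht => lyapunov_drift eps N t z Heps Hlarge Hz
                         ltac:(apply lt_INR in Ht; lra))
     ltac:(apply Rdiv_nonneg; nra) ntot 0 (0%nat, D0, X0, Y0) HI0 ltac:(lia)) as [Hlo Hhit].
  unfold dev_prob. fold ntot. split; [exact Hlo|].
  eapply Rle_trans; [exact Hhit|].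
  unfold lyapunov. simpl pow. rewrite Rinv_1, Rmult_1_r.
  apply Rplus_le_compat_l.
  replace (weight eps * drift_const * T / INR N)
    with ((INR N * T) * (weight eps * drift_const / INR N ^ 2)) by (field; lra).
  apply Rmult_le_compat_r; [apply Rdiv_nonneg; nra | lra].
Qed.

Lemma large_enough_above N :
  2 + (1 + Gam) / (1 - Gam) + lam * alpha + lam * sigma + 2 / (1 - Gam) <= INR N ->
  large_enough N.
Proof.
  intros H.
  assert (H1 : 0 <= (1 + Gam) / (1 - Gam)) by (apply Rdiv_nonneg; lra).
  assert (H2 : 0 <= 2 / (1 - Gam)) by (apply Rdiv_nonneg; lra).
  assert (HN : (2 <= N)%nat) by (apply INR_le; simpl; lra).
  repeat split; auto; try lra.
  - apply Rmult_le_reg_r with (INR N - 1); [lra|]. unfold Rdiv.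
    rewrite Rmult_assoc, Rinv_l by lra.
    assert (1 + Gam <= INR N * (1 - Gam)); [|nra].
    apply Rmult_le_reg_r with (/ (1 - Gam)); [apply Rinv_0_lt_compat; lra|].
    rewrite Rmult_assoc, Rinv_r by lra. unfold Rdiv in H1. lra.
  - replace (/ INR N) with (1 / INR N) by (field; lra).
    apply Rdiv_le_of_le_mul; [lra | lra|].
    replace (1 / ((1 - Gam) / 2)) with (2 / (1 - Gam)) by (field; lra). lra.
Qed.

Lemma large_N_conditions eps eps' : 0 < eps -> 0 < eps' ->
  exists N0, forall N, (N >= N0)%nat ->
    large_enough N /\ speed / INR N <= eps / 2 /\
    weight eps * drift_const * T / INR N <= eps' / 4.
Proof.
  intros Heps Heps'.
  destruct drift_constants_nonneg as [_ HC']. pose proof (weight_pos eps Heps).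
  pose proof speed_nonneg.
  assert (Ht1 : 0 <= (1 + Gam) / (1 - Gam)) by (apply Rdiv_nonneg; lra).
  assert (Ht2 : 0 <= 2 / (1 - Gam)) by (apply Rdiv_nonneg; lra).
  assert (Ht3 : 0 <= 2 * speed / eps) by (apply Rdiv_nonneg; lra).
  assert (Ht4 : 0 <= 4 * (weight eps * drift_const * T) / eps')
    by (apply Rdiv_nonneg; [apply Rmult_le_pos; [lra | apply Rmult_le_pos; nra] | lra]).
  destruct (nat_above (2 + (1 + Gam) / (1 - Gam) + lam * alpha + lam * sigma + 2 / (1 - Gam)
      + 2 * speed / eps + 4 * (weight eps * drift_const * T) / eps')) as [N0 HN0].
  exists N0. intros N HN. specialize (HN0 N HN).
  split; [apply large_enough_above; lra|]. split.
  - apply (Rdiv_le_of_le_mul speed (eps / 2) (INR N)); [lra | lra|].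
    replace (speed / (eps / 2)) with (2 * speed / eps) by (field; lra). lra.
  - apply (Rdiv_le_of_le_mul _ (eps' / 4) (INR N)); [lra | lra|].
    replace (weight eps * drift_const * T / (eps' / 4))
      with (4 * (weight eps * drift_const * T) / eps') by (field; lra). lra.
Qed.

(* The theorem for one eps, with the ODE data fixed: for N large the initial
   squared deviation is at most 3 r, with r chosen so that weight * 3 r < eps' / 2,
   and the O(1/N) term is below eps' / 4. *)
Lemma dev_prob_vanishes (D0 X0 Y0 : nat -> nat) eps :
  (forall N, admissible N (0%nat, D0 N, X0 N, Y0 N)) -> b 0 = 0 ->
  Un_cv (fun N => INR (D0 N) / INR N) (d 0) -> Un_cv (fun N => INR (X0 N) / INR N) (x 0) ->
  Un_cv (fun N => INR (Y0 N) / INR N) (y 0) -> 0 < eps ->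
  Un_cv (fun N => dev_prob Gam lam alpha sigma N (D0 N) (X0 N) (Y0 N) T eps b d x y) 0.
Proof.
  intros HI ib cD0 cX0 cY0 Heps eps' Heps'.
  pose proof (weight_pos eps Heps) as Hweight.
  set (r := Rmin 1 (eps' / (6 * weight eps + 1))).
  assert (Hr : 0 < r) by (apply Rmin_glb_lt; [lra | apply Rdiv_lt_0_compat; lra]).
  assert (Hr1 : r <= 1) by apply Rmin_l.
  assert (Hr2 : r <= eps' / (6 * weight eps + 1)) by apply Rmin_r.
  destruct (cD0 r Hr) as [Nd HNd]. destruct (cX0 r Hr) as [Nx HNx].
  destruct (cY0 r Hr) as [Ny HNy].
  destruct (large_N_conditions eps eps' Heps Heps') as [N0 HN0].
  exists (max N0 (max Nd (max Nx Ny))). intros N HN.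
  destruct (HN0 N ltac:(lia)) as (Hlarge & Hspeed & Hfinal).
  specialize (HNd N ltac:(lia)). specialize (HNx N ltac:(lia)). specialize (HNy N ltac:(lia)).
  unfold R_dist in HNd, HNx, HNy.
  assert (HNpos : 0 < INR N) by (destruct Hlarge as (HN2 & _); apply lt_0_INR; lia).
  destruct (hitting_estimate N eps (D0 N) (X0 N) (Y0 N) Hlarge Heps Hspeed (HI N))
    as [Hlo Hhi].
  unfold R_dist. rewrite Rminus_0_r, Rabs_pos_eq by exact Hlo.
  assert (Hsq : forall a, Rabs a < r -> a ^ 2 <= r).
  { intros a Ha. rewrite <- (pow2_abs a). pose proof (Rabs_pos a). simpl. nra. }
  assert (Hinit : sdev_at N 0 (0%nat, D0 N, X0 N, Y0 N) <= 3 * r).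
  { unfold sdev_at, Sdev. replace (INR 0 / INR N) with 0 by (simpl; field; lra).
    rewrite ib. replace (INR 0 / INR N - 0) with 0 by (simpl; field; lra).
    pose proof (Hsq _ HNd). pose proof (Hsq _ HNx). pose proof (Hsq _ HNy). simpl. lra. }
  assert (Hw3 : weight eps * (3 * r) < eps' / 2).
  { apply Rle_lt_trans with (weight eps * (3 * (eps' / (6 * weight eps + 1))));
      [apply Rmult_le_compat_l; lra|].
    apply Rmult_lt_reg_r with (6 * weight eps + 1); [lra|].
    replace (weight eps * (3 * (eps' / (6 * weight eps + 1))) * (6 * weight eps + 1))
      with (3 * weight eps * eps') by (field; lra).
    nra. }
  assert (weight eps * sdev_at N 0 (0%nat, D0 N, X0 N, Y0 N) <= weight eps * (3 * r))
    by (apply Rmult_le_compat_l; lra).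
  lra.
Qed.

End FluidApproximation.

Theorem theorem4
  (Gam lam alpha sigma : R)
  (hGam : 0 < Gam < 1) (hlam : 0 < lam) (halpha : 0 <= alpha) (hsigma : 0 <= sigma)
  (d0 x0 y0 : R)
  (hd0 : 0 < d0 <= 1) (hx0 : 0 <= x0 <= d0) (hy0 : 0 <= y0 <= 1 - d0)
  (D0 X0 Y0 : nat -> nat)
  (hD0 : forall N, (D0 N <= N)%nat)
  (hX0 : forall N, (X0 N <= D0 N)%nat)
  (hY0 : forall N, (Y0 N <= N - D0 N)%nat)
  (cD0 : Un_cv (fun N => INR (D0 N) / INR N) d0)
  (cX0 : Un_cv (fun N => INR (X0 N) / INR N) x0)
  (cY0 : Un_cv (fun N => INR (Y0 N) / INR N) y0)
  (b d x y : R -> R)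
  (ib : b 0 = 0) (id0 : d 0 = d0) (ix : x 0 = x0) (iy : y 0 = y0)
  (odeb : forall u, 0 <= u -> derivable_pt_lim b u (d u))
  (oded : forall u, 0 <= u -> derivable_pt_lim d u
     (Gam * d u / (1 - Gam * b u) * (1 - b u - d u) - d u))
  (odex : forall u, 0 <= u -> derivable_pt_lim x u
     (lam * alpha * (x u + y u) * ((b u + d u) - x u)
      + Gam * d u / (1 - Gam * b u) * y u))
  (odey : forall u, 0 <= u -> derivable_pt_lim y u
     (lam * sigma * (x u + y u) * (1 - (b u + d u) - y u)
      - Gam * d u / (1 - Gam * b u) * y u)) :
  forall T eps : R, 0 < T -> 0 < eps ->
    Un_cv (fun N => dev_prob Gam lam alpha sigma N (D0 N) (X0 N) (Y0 N) T eps b d x y) 0.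
Proof.
  intros T eps HT Heps.
  assert (hla : 0 <= lam * alpha) by nra.
  assert (hls : 0 <= lam * sigma) by nra.
  (* Along the solution b <= 1, so 1 - Gam b stays away from 0. *)
  pose proof (b_le_1 Gam d0 b d hGam hd0 ib id0 odeb oded) as hb1.
  destruct (ode_field_form Gam (lam * alpha) (lam * sigma) b d x y odeb oded odex odey)
    as (Db & Dd & Dx & Dy).
  destruct (common_bound b d x y (T + 1)) as [M [HM HMz]];
    [lra | intros c Hc; repeat split; eapply der_cont;
           [apply Db | apply Dd | apply Dx | apply Dy]; lra|].
  destruct (vector_field_lip Gam (lam * alpha) (lam * sigma) M (den_margin Gam) hGam)
    as (L & HL & LFb & LFd & LFx & LFy); [unfold den_margin; lra|].
  subst d0 x0 y0.
  apply (dev_prob_vanishes Gam lam alpha sigma hGam hla hls b d x y T HT Db Dd Dx Dy hb1 M L HM);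
    auto; try (intros u Hu; apply HMz, Hu).
  intros N. simpl. specialize (hD0 N). specialize (hX0 N). specialize (hY0 N). lia.
Qed.
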